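(* Let $n\in\{1,2,3\}$, $k\in\mathbb{N}$ ($k=1$ if $n=3$), and for $\omega=\sqrt{m^2-\epsilon^2}$ close to $m$ let $(v,u)$ be the solitary wave profile of the context. Define the $4\times4$ matrix-valued function $W(R,\epsilon)$ whose entries, with $v,u,f,f'$ evaluated at $r=R/\epsilon$, are $W_{13}=\frac1{2m}-\hat V(R)^{2k}-\frac{m-\omega-f}{\epsilon^2}$, $W_{24}=\omega-m-f$, $W_{31}=-\frac1{2m}+(2k+1)\hat V(R)^{2k}-\frac{\omega-m+f+2f'v^2}{\epsilon^2}$, $W_{32}=W_{41}=\frac{2f'vu}{\epsilon}$, $W_{42}=m-\omega+f-2f'u^2$, and all other entries zero. Then $\sup_{R}\|W(R,\epsilon)\|_{\mathbb{C}^4\to\mathbb{C}^4}=O(\epsilon^2)$ as $\epsilon\to0$.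
   Context: Solitary wave profile: with $\epsilon=\sqrt{m^2-\omega^2}$, $(v,u)$ is the real solution of $\omega v=\partial_r u+\frac{n-1}{r}u+mv-(v^2-u^2)^kv$, $\omega u=-\partial_r v-mu+(v^2-u^2)^ku$ (radial variable $r>0$ for $n=2,3$; $r=x\in\mathbb{R}$ for $n=1$) of the form $v(r)=\epsilon^{1/k}[\hat V(\epsilon r)+\tilde V(\epsilon r)]$, $u(r)=\epsilon^{1+1/k}[\hat U(\epsilon r)+\tilde U(\epsilon r)]$ with $\|\tilde V\|_{H^2}+\|\tilde U\|_{H^2}=O(\epsilon^2)$, where $\hat V(R)=(2m)^{-1/(2k)}F(R)$, $\hat U=-(2m)^{-1/(2k)-1}F'$, and $F$ is the unique positive radial $H^1(\mathbb{R}^n)$ solution of $-\Delta F-F^{2k+1}=-F$. Also $f=(v^2-u^2)^k$, $f'=k(v^2-u^2)^{k-1}$. ($W$ is the zero-order remainder obtained when the eigenvalue problem for the linearization $\begin{pmatrix}0&\mathrm{L}_-\\-\mathrm{L}_+&0\end{pmatrix}$ is rescaled by $R=\epsilon r$, $\varphi_2=\epsilon\Phi_2$, $\vartheta_2=\epsilon\Theta_2$, dividing rows 1,3 by $\epsilon^2$ and rows 2,4 by $\epsilon$, and compared with its $\epsilon\to0$ limit.) *)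

From Stdlib Require Import Reals Lra Lia.
Open Scope R_scope.

Definition dom (n : nat) (r : R) : Prop := n = 1%nat \/ 0 < r.

(* Integral over the domain of a (nonnegative) integrand is finite and <= L:
   all Riemann integrals over compact subintervals [a,b] of the domain
   exist and are bounded by L (improper integral, exhausted from inside). *)
Definition bounded_integral (D : R -> Prop) (g : R -> R) (L : R) : Prop :=
  forall a b, D a -> D b -> a <= b ->
    exists pr : Riemann_integrable g a b, RiemannInt pr <= L.

(* Radial weight r^{n-1} and radial squared H^k densities (up to the
   constant |S^{n-1}|). For a radial g(|x|): |grad g|^2 = g'^2 and
   |D^2 g|^2 = g''^2 + (n-1) (g'/r)^2. *)
Definition H1_le (n : nat) (g g1 : R -> R) (M : R) : Prop :=
  bounded_integral (dom n) (fun r => (g r ^ 2 + g1 r ^ 2) * r ^ (n - 1)) (M ^ 2).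

Definition H2_le (n : nat) (g : R -> R) (M : R) : Prop :=
  0 <= M /\
  exists g1 g2 : R -> R,
    (forall r, dom n r -> derivable_pt_lim g r (g1 r) /\ derivable_pt_lim g1 r (g2 r)) /\
    bounded_integral (dom n)
      (fun r => (g r ^ 2 + g1 r ^ 2 + g2 r ^ 2 + INR (n - 1) * (g1 r / r) ^ 2) * r ^ (n - 1))
      (M ^ 2).

(* F is a positive radial H^1(R^n) solution of -Delta F - F^{2k+1} = -F,
   written in the radial variable, with F' = dF, F'' = ddF. *)
Definition ground_state (n k : nat) (F dF ddF : R -> R) : Prop :=
  (forall r, dom n r ->
     derivable_pt_lim F r (dF r) /\ derivable_pt_lim dF r (ddF r) /\
     0 < F r /\
     - (ddF r + INR (n - 1) / r * dF r) - F r ^ (2 * k + 1) = - F r) /\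
  (n = 1%nat -> forall x, F (- x) = F x) /\
  (exists L, H1_le n F dF L).

Definition omega (m eps : R) : R := sqrt (m ^ 2 - eps ^ 2).

(* (v,u) real solution of the stationary radial Dirac system. *)
Definition dirac_profile (n k : nat) (m om : R) (v u : R -> R) : Prop :=
  exists dv du : R -> R,
  forall r, dom n r ->
    derivable_pt_lim v r (dv r) /\ derivable_pt_lim u r (du r) /\
    om * v r = du r + INR (n - 1) / r * u r + m * v r - (v r ^ 2 - u r ^ 2) ^ k * v r /\
    om * u r = - dv r - m * u r + (v r ^ 2 - u r ^ 2) ^ k * u r.

Definition Vhat (k : nat) (m : R) (F : R -> R) (rho : R) : R :=
  Rpower (2 * m) (- (1 / (2 * INR k))) * F rho.
Definition Uhat (k : nat) (m : R) (dF : R -> R) (rho : R) : R :=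
  - (Rpower (2 * m) (- (1 / (2 * INR k)) - 1) * dF rho).

(* Remainders: v(r) = eps^{1/k} [Vhat(eps r) + Vt(eps r)],
               u(r) = eps^{1+1/k} [Uhat(eps r) + Ut(eps r)]. *)
Definition Vtil (k : nat) (m : R) (F : R -> R) (eps : R) (v : R -> R) (rho : R) : R :=
  v (rho / eps) / Rpower eps (1 / INR k) - Vhat k m F rho.
Definition Util (k : nat) (m : R) (dF : R -> R) (eps : R) (u : R -> R) (rho : R) : R :=
  u (rho / eps) / Rpower eps (1 + 1 / INR k) - Uhat k m dF rho.

(* The 4x4 matrix W(R,eps), indices 0..3 (entry W_{ij} is W (i-1) (j-1)). *)
Definition Wmat (k : nat) (m : R) (F : R -> R) (eps : R) (v u : R -> R) (rho : R)
  (i j : nat) : R :=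
  let r := rho / eps in
  let vv := v r in
  let uu := u r in
  let f := (vv ^ 2 - uu ^ 2) ^ k in
  let fp := INR k * (vv ^ 2 - uu ^ 2) ^ (k - 1) in
  let om := omega m eps in
  let Vh := Vhat k m F rho in
  match i, j with
  | O, S (S O) => 1 / (2 * m) - Vh ^ (2 * k) - (m - om - f) / eps ^ 2
  | S O, S (S (S O)) => om - m - f
  | S (S O), O => - (1 / (2 * m)) + INR (2 * k + 1) * Vh ^ (2 * k)
            - (om - m + f + 2 * fp * vv ^ 2) / eps ^ 2
  | S (S O), S O => 2 * fp * vv * uu / eps
  | S (S (S O)), O => 2 * fp * vv * uu / eps
  | S (S (S O)), S O => m - om + f - 2 * fp * uu ^ 2
  | _, _ => 0
  end.

(* Complex numbers as pairs (Re, Im); vectors of C^4 as z 0, .., z 3. *)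
Definition cabs2 (z : R * R) : R := fst z ^ 2 + snd z ^ 2.
Definition vnorm4 (z : nat -> R * R) : R := sqrt (sum_f_R0 (fun i => cabs2 (z i)) 3).
Definition matvec4 (A : nat -> nat -> R) (z : nat -> R * R) (i : nat) : R * R :=
  (sum_f_R0 (fun j => A i j * fst (z j)) 3, sum_f_R0 (fun j => A i j * snd (z j)) 3).
Definition opnorm_le4 (A : nat -> nat -> R) (M : R) : Prop :=
  forall z : nat -> R * R, vnorm4 (matvec4 A z) <= M * vnorm4 z.

From Stdlib Require Import Reals Lra Lia.
From Coquelicot Require Import Coquelicot.
Open Scope R_scope.

(* Set A = v(r)/eps^{1/k} and B = u(r)/eps^{1+1/k} at r = R/eps, so that
   v = p A and u = eps p B with p^{2k} = eps^2.  With D = A^2 - eps^2 B^2 every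
   nonlinear term is explicit: f = eps^2 D^k, f' v^2 = k eps^2 D^{k-1} A^2, ...
   Together with (m - omega)/eps^2 = 1/(2m) + O(eps^2), each entry of W becomes
   O(eps^2) as soon as Vhat(R), A and B are bounded and A - Vhat(R) = O(eps^2),
   uniformly in R.  These uniform bounds rest on two analytic facts:
   (1) a radial Sobolev inequality sup|g| <= 3 ||g||_{H^2} in dimension n <= 3,
       applied to the remainders Vtil and Util;
   (2) the ground state F and its derivative F' are bounded on the domain:
       away from the origin by a one-dimensional trace estimate, near the
       origin (n = 2, 3) through the flux r^{n-1} F' and the radial ODE. *)

Lemma derivable_pt_lim_continuity (f : R -> R) (x l : R) :
  derivable_pt_lim f x l -> continuity_pt f x.
Proof. intro H. apply derivable_continuous_pt. exists l. exact H. Qed.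

Lemma derivable_pt_lim_eq (f : R -> R) (x l l' : R) :
  derivable_pt_lim f x l -> l = l' -> derivable_pt_lim f x l'.
Proof. intros H ->; exact H. Qed.

(* Derivative and continuity rules in pointwise form, so that [apply] can
   match goals about [fun y => f y * g y] etc. *)
Lemma dlim_mult (f g : R -> R) (x df dg : R) :
  derivable_pt_lim f x df -> derivable_pt_lim g x dg ->
  derivable_pt_lim (fun y => f y * g y) x (df * g x + f x * dg).
Proof. intros. apply (derivable_pt_lim_mult f g x df dg); auto. Qed.
Lemma dlim_plus (f g : R -> R) (x df dg : R) :
  derivable_pt_lim f x df -> derivable_pt_lim g x dg ->
  derivable_pt_lim (fun y => f y + g y) x (df + dg).
Proof. intros. apply (derivable_pt_lim_plus f g x df dg); auto. Qed.
Lemma dlim_opp (f : R -> R) (x df : R) :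
  derivable_pt_lim f x df -> derivable_pt_lim (fun y => - f y) x (- df).
Proof. intros. apply (derivable_pt_lim_opp f x df); auto. Qed.
Lemma dlim_const (c x : R) : derivable_pt_lim (fun _ => c) x 0.
Proof. apply derivable_pt_lim_const. Qed.
Lemma dlim_id (x : R) : derivable_pt_lim (fun y => y) x 1.
Proof. apply derivable_pt_lim_id. Qed.

Lemma cont_mult (f g : R -> R) (x : R) :
  continuity_pt f x -> continuity_pt g x -> continuity_pt (fun y => f y * g y) x.
Proof. intros; apply (continuity_pt_mult f g); auto. Qed.
Lemma cont_plus (f g : R -> R) (x : R) :
  continuity_pt f x -> continuity_pt g x -> continuity_pt (fun y => f y + g y) x.
Proof. intros; apply (continuity_pt_plus f g); auto. Qed.
Lemma cont_opp (f : R -> R) (x : R) :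
  continuity_pt f x -> continuity_pt (fun y => - f y) x.
Proof. intros; apply (continuity_pt_opp f); auto. Qed.
Lemma cont_const (c x : R) : continuity_pt (fun _ => c) x.
Proof. apply continuity_pt_const. intros a b; reflexivity. Qed.
Lemma cont_id (x : R) : continuity_pt (fun y => y) x.
Proof. apply derivable_continuous_pt. apply derivable_pt_id. Qed.
Lemma cont_pow (f : R -> R) (x : R) (n : nat) :
  continuity_pt f x -> continuity_pt (fun y => f y ^ n) x.
Proof. intro H. induction n; simpl. apply cont_const. apply cont_mult; auto. Qed.

Ltac solve_derivative :=
  repeat first [ apply dlim_mult | apply dlim_plus | apply dlim_opp
               | apply dlim_const | apply dlim_id | eassumption ].
Ltac solve_continuity :=
  repeat first [ apply cont_mult | apply cont_plus | apply cont_opp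
               | apply cont_const | apply cont_id | eassumption ].

Lemma two_abs_mul_le (x y : R) : 2 * Rabs (x * y) <= x ^ 2 + y ^ 2.
Proof.
rewrite Rabs_mult, <- (pow2_abs x), <- (pow2_abs y).
pose proof (pow2_ge_0 (Rabs x - Rabs y)). nra.
Qed.

Lemma abs_le_of_sq_le (x K : R) : 0 <= K -> x ^ 2 <= 2 * K ^ 2 -> Rabs x <= 2 * K.
Proof.
intros HK H. rewrite <- (pow2_abs x) in H. pose proof (Rabs_pos x).
destruct (Rle_dec (Rabs x) (2 * K)); auto. nra.
Qed.

Lemma Rabs_triang3 (a b c : R) : Rabs (a + b + c) <= Rabs a + Rabs b + Rabs c.
Proof. eapply Rle_trans. apply Rabs_triang. pose proof (Rabs_triang a b). lra. Qed.

Lemma Rabs_mult_le (a b A B : R) : Rabs a <= A -> Rabs b <= B -> Rabs (a * b) <= A * B.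
Proof. intros. rewrite Rabs_mult. apply Rmult_le_compat; auto; apply Rabs_pos. Qed.

Lemma Rabs_pow_le (z K : R) (j : nat) : Rabs z <= K -> Rabs (z ^ j) <= K ^ j.
Proof. intro H. rewrite <- RPow_abs. apply pow_incr. split; auto. apply Rabs_pos. Qed.

Lemma increment_le_of_deriv_le (g g' h q Q : R -> R) (a b alpha K : R) :
  a <= b -> 0 <= alpha ->
  (forall x, a <= x <= b -> derivable_pt_lim g x (g' x) /\ continuity_pt g' x /\
     derivable_pt_lim Q x (q x) /\ continuity_pt q x) ->
  forall pr : Riemann_integrable h a b, RiemannInt pr <= K ->
  (forall x, a < x < b -> g' x <= alpha * h x + q x) ->
  g b - g a <= alpha * K + (Q b - Q a).
Proof.
intros hab ha H pr HK Hle.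
assert (FTC : forall (f f' : R -> R),
  (forall x, a <= x <= b -> derivable_pt_lim f x (f' x) /\ continuity_pt f' x) ->
  is_RInt f' a b (minus (f b) (f a))).
{ intros f f' Hf. apply (@is_RInt_derive R_CompleteNormedModule); intros x Hx;
  rewrite Rmin_left in Hx by lra; rewrite Rmax_right in Hx by lra;
  destruct (Hf x Hx) as [Df Cf].
  - now apply is_derive_Reals.
  - now apply continuity_pt_filterlim. }
assert (E1 := FTC g g' ltac:(intros x Hx; destruct (H x Hx); tauto)).
assert (E2 := FTC Q q ltac:(intros x Hx; destruct (H x Hx); tauto)).
assert (Eh : ex_RInt h a b) by (apply ex_RInt_Reals_1; exact pr).
assert (Ehq : ex_RInt (fun x => alpha * h x + q x) a b).
{ apply (ex_RInt_plus (V:=R_NormedModule) (fun x => scal alpha (h x)) q).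
  - apply (ex_RInt_scal (V:=R_NormedModule)); exact Eh.
  - exists (minus (Q b) (Q a)); exact E2. }
assert (Hm := RInt_le g' (fun x => alpha * h x + q x) a b hab (ex_intro _ _ E1) Ehq Hle).
rewrite (is_RInt_unique _ _ _ _ E1) in Hm.
rewrite (RInt_plus (fun x => scal alpha (h x)) q) in Hm;
  [| apply (ex_RInt_scal (V:=R_NormedModule)); exact Eh | exists (minus (Q b) (Q a)); exact E2].
rewrite (RInt_scal (V:=R_CompleteNormedModule)), (is_RInt_unique _ _ _ _ E2),
  (RInt_Reals h a b pr) in Hm by exact Eh.
unfold minus, plus, scal, opp in Hm; simpl in Hm; unfold mult in Hm; simpl in Hm.
assert (alpha * RiemannInt pr <= alpha * K) by (apply Rmult_le_compat_l; auto).
lra.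
Qed.

Lemma abs_increment_le_of_deriv_le (g g' h q Q : R -> R) (a b alpha K : R) :
  a <= b -> 0 <= alpha ->
  (forall x, a <= x <= b -> derivable_pt_lim g x (g' x) /\ continuity_pt g' x /\
     derivable_pt_lim Q x (q x) /\ continuity_pt q x) ->
  forall pr : Riemann_integrable h a b, RiemannInt pr <= K ->
  (forall x, a < x < b -> Rabs (g' x) <= alpha * h x + q x) ->
  Rabs (g b - g a) <= alpha * K + (Q b - Q a).
Proof.
intros hab ha H pr HK Hle. apply Rabs_le. split.
- assert (X := increment_le_of_deriv_le (fun s => - g s) (fun s => - g' s) h q Q
    a b alpha K hab ha).
  assert (Y : - g b - - g a <= alpha * K + (Q b - Q a)).
  { apply (X ltac:(intros x Hx; destruct (H x Hx) as (D & C & DQ & CQ);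
                   repeat split; auto; [apply dlim_opp | apply cont_opp]; auto) pr HK).
    intros x Hx. pose proof (Rle_abs (- g' x)). rewrite Rabs_Ropp in H0.
    specialize (Hle x Hx). lra. }
  lra.
- apply (increment_le_of_deriv_le g g' h q Q a b alpha K hab ha H pr HK).
  intros x Hx. pose proof (Rle_abs (g' x)). specialize (Hle x Hx). lra.
Qed.

(* The radial H^2 density of [H2_le]; for a radial function g(|x|) it is
   (g^2 + |grad g|^2 + |D^2 g|^2) r^{n-1}. *)
Definition H2_density (n : nat) (g g1 g2 : R -> R) (r : R) : R :=
  (g r ^ 2 + g1 r ^ 2 + g2 r ^ 2 + INR (n - 1) * (g1 r / r) ^ 2) * r ^ (n - 1).

Lemma H2_le_mono (n : nat) (g : R -> R) (M M' : R) :
  H2_le n g M -> M <= M' -> H2_le n g M'.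
Proof.
intros [HM [g1 [g2 [Hd Hint]]]] HMM. split; [lra|]. exists g1, g2. split; auto.
intros a b Ha Hb Hab. destruct (Hint a b Ha Hb Hab) as [pr Hpr]. exists pr.
assert (M ^ 2 <= M' ^ 2) by (apply pow_incr; lra). lra.
Qed.

(* One-dimensional trace estimate: integrating the derivative of
   s |-> -(a+1-s) g(s)^2 over [a,a+1] gives
   g(a)^2 <= \int_a^{a+1} (g^2 + 2 |g g'|). *)
Lemma trace_unit_interval (g g' h : R -> R) (a K alpha beta : R) : 0 <= alpha ->
  (forall x, a <= x <= a + 1 -> derivable_pt_lim g x (g' x) /\ continuity_pt g' x) ->
  forall pr : Riemann_integrable h a (a + 1), RiemannInt pr <= K ->
  (forall x, a < x < a + 1 -> g x ^ 2 + 2 * Rabs (g x * g' x) <= alpha * h x + beta) ->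
  g a ^ 2 <= alpha * K + beta.
Proof.
intros Halpha Hd pr HK Hh.
assert (X := increment_le_of_deriv_le (fun s => - ((a + 1 - s) * (g s * g s)))
  (fun s => g s * g s - 2 * (a + 1 - s) * (g s * g' s)) h (fun _ => beta) (fun s => beta * s)
  a (a + 1) alpha K ltac:(lra) Halpha).
assert (Y : - ((a + 1 - (a + 1)) * (g (a + 1) * g (a + 1))) - - ((a + 1 - a) * (g a * g a))
            <= alpha * K + (beta * (a + 1) - beta * a)).
{ refine (X _ pr HK _).
  - intros x Hx. destruct (Hd x Hx) as [D1 C1].
    assert (C0 := derivable_pt_lim_continuity _ _ _ D1).
    repeat split.
    + eapply derivable_pt_lim_eq. { unfold Rminus. solve_derivative. } cbv beta; ring.
    + unfold Rminus. solve_continuity.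
    + eapply derivable_pt_lim_eq. solve_derivative. cbv beta; ring.
    + apply cont_const.
  - intros x Hx. specialize (Hh x Hx). assert (0 <= a + 1 - x <= 1) by lra.
    assert ((a + 1 - x) * (g x * g' x) >= - Rabs (g x * g' x)).
    { pose proof (Rabs_pos (g x * g' x)). pose proof (Rle_abs (- (g x * g' x))) as Hn.
      rewrite Rabs_Ropp in Hn. nra. }
    simpl in Hh. lra. }
replace (a + 1 - (a + 1)) with 0 in Y by ring. replace (a + 1 - a) with 1 in Y by ring.
simpl. lra.
Qed.

Lemma H2_density_ge_far (n : nat) (g g1 g2 : R -> R) (s : R) :
  (n = 1%nat \/ 1 <= s) ->
  g s ^ 2 + g1 s ^ 2 <= H2_density n g g1 g2 s.
Proof.
intros Hs. unfold H2_density.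
assert (0 <= INR (n - 1) * (g1 s / s) ^ 2) by (apply Rmult_le_pos; [apply pos_INR | apply pow2_ge_0]).
assert (1 <= s ^ (n - 1)) by (destruct Hs as [-> | Hs]; [simpl; lra | apply pow_R1_Rle; lra]).
pose proof (pow2_ge_0 (g2 s)). pose proof (pow2_ge_0 (g s)). pose proof (pow2_ge_0 (g1 s)). nra.
Qed.

(* Near the origin in dimension 2 and 3 the term (n-1) (g'/s)^2 s^{n-1}
   dominates g'^2; this replaces the missing weight s^{n-1}. *)
Lemma H2_density_ge_near (n : nat) (g g1 g2 : R -> R) (s : R) :
  (n = 2%nat \/ n = 3%nat) -> 0 < s <= 1 ->
  g1 s ^ 2 <= H2_density n g g1 g2 s.
Proof.
intros Hn Hs. unfold H2_density.
pose proof (pow2_ge_0 (g2 s)). pose proof (pow2_ge_0 (g s)). pose proof (pow2_ge_0 (g1 s)).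
assert (E : (g1 s / s) ^ 2 * s ^ 2 = g1 s ^ 2) by (field; lra).
destruct Hn as [-> | ->]; simpl.
- assert (E2 : (g1 s / s) ^ 2 * s = g1 s ^ 2 / s) by (field; lra).
  assert (g1 s ^ 2 <= g1 s ^ 2 / s).
  { apply (Rmult_le_reg_r s); [lra|]. unfold Rdiv; rewrite Rmult_assoc, Rinv_l by lra. nra. }
  assert (0 <= (g s ^ 2 + g1 s ^ 2 + g2 s ^ 2) * s) by nra.
  replace ((g s ^ 2 + g1 s ^ 2 + g2 s ^ 2 + 1 * (g1 s / s) ^ 2) * (s * 1)) with
    ((g s ^ 2 + g1 s ^ 2 + g2 s ^ 2) * s + (g1 s / s) ^ 2 * s) by ring. lra.
- assert (0 <= (g s ^ 2 + g1 s ^ 2 + g2 s ^ 2) * (s * s)) by nra.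
  replace ((g s ^ 2 + g1 s ^ 2 + g2 s ^ 2 + (1 + 1) * (g1 s / s) ^ 2) * (s * (s * 1))) with
    ((g s ^ 2 + g1 s ^ 2 + g2 s ^ 2) * (s * s) + 2 * ((g1 s / s) ^ 2 * s ^ 2)) by ring. lra.
Qed.

Section RadialSobolev.
Variables (n : nat) (g g1 g2 : R -> R) (M : R).
Hypothesis Hderiv : forall r, dom n r ->
  derivable_pt_lim g r (g1 r) /\ derivable_pt_lim g1 r (g2 r).
Hypothesis Hint : bounded_integral (dom n) (H2_density n g g1 g2) (M ^ 2).

Lemma H2_sup_far : 0 <= M ->
  forall r, dom n r -> (n = 1%nat \/ 1 <= r) -> Rabs (g r) <= 2 * M.
Proof.
intros HM r Hr Hr1.
assert (Dx : forall x, r <= x -> dom n x) by (intros x Hx; destruct Hr; [left | right; lra]; auto).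
destruct (Hint r (r + 1) Hr (Dx (r + 1) ltac:(lra)) ltac:(lra)) as [pr Hpr].
apply abs_le_of_sq_le; [lra|].
assert (g r ^ 2 <= 2 * M ^ 2); [|lra].
replace (2 * M ^ 2) with (2 * M ^ 2 + 0) by ring.
refine (trace_unit_interval g g1 _ r (M ^ 2) 2 0 ltac:(lra) _ pr Hpr _).
- intros x Hx. destruct (Hderiv x (Dx x ltac:(lra))) as [D1 D2].
  split; [exact D1 | exact (derivable_pt_lim_continuity _ _ _ D2)].
- intros x Hx. assert (Hfar := H2_density_ge_far n g g1 g2 x).
  assert (g x ^ 2 + g1 x ^ 2 <= H2_density n g g1 g2 x)
    by (apply Hfar; destruct Hr1; [left | right; lra]; auto).
  pose proof (two_abs_mul_le (g x) (g1 x)). pose proof (pow2_ge_0 (g1 x)). lra.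
Qed.

(* In dimension 2, 3: |g(r) - g(1)| <= M for 0 < r < 1, by integrating
   |g'| <= density/(2M) + M/2 over [r,1]. *)
Lemma H2_oscillation_near : (n = 2%nat \/ n = 3%nat) -> 0 < M ->
  forall r, 0 < r < 1 -> Rabs (g 1 - g r) <= M.
Proof.
intros Hn HM r Hr.
assert (D1 : dom n 1) by (right; lra).
destruct (Hint r 1 (or_intror (proj1 Hr)) D1 ltac:(lra)) as [pr Hpr].
assert (Hbound : forall x, r < x < 1 ->
          Rabs (g1 x) <= / (2 * M) * H2_density n g g1 g2 x + M / 2).
{ intros x Hx. assert (g1 x ^ 2 <= H2_density n g g1 g2 x) by (apply H2_density_ge_near; auto; lra).
  assert (2 * Rabs (g1 x * M) <= g1 x ^ 2 + M ^ 2) by apply two_abs_mul_le.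
  rewrite Rabs_mult, (Rabs_right M) in H0 by lra.
  apply (Rmult_le_reg_l (2 * M)); [lra|].
  rewrite Rmult_plus_distr_l, <- Rmult_assoc, Rinv_r by lra. nra. }
assert (X := abs_increment_le_of_deriv_le g g1 (H2_density n g g1 g2) (fun _ => M / 2) (fun s => M / 2 * s)
  r 1 (/ (2 * M)) (M ^ 2) ltac:(lra) ltac:(left; apply Rinv_0_lt_compat; lra)).
assert (Y : Rabs (g 1 - g r) <= / (2 * M) * M ^ 2 + (M / 2 * 1 - M / 2 * r)).
{ refine (X _ pr Hpr Hbound). intros x Hx.
  destruct (Hderiv x ltac:(right; lra)) as [Dg Dg1]. repeat split; auto.
  - exact (derivable_pt_lim_continuity _ _ _ Dg1).
  - eapply derivable_pt_lim_eq. solve_derivative. cbv beta; ring.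
  - apply cont_const. }
assert (/ (2 * M) * M ^ 2 = M / 2) by (field; lra).
assert (0 <= M / 2 * r) by (apply Rmult_le_pos; lra). lra.
Qed.

End RadialSobolev.

Lemma radial_sobolev_sup (n : nat) (g : R -> R) (M : R) :
  (n = 1%nat \/ n = 2%nat \/ n = 3%nat) -> H2_le n g M ->
  forall r, dom n r -> Rabs (g r) <= 3 * M.
Proof.
intros Hn HgM r Hr. apply Rle_plus_epsilon. intros d Hd.
set (M' := M + d / 3).
destruct (H2_le_mono n g M M' HgM ltac:(unfold M'; lra)) as [HM' [g1 [g2 [Hderiv Hint]]]].
replace (3 * M + d) with (3 * M') by (unfold M'; field).
assert (HMp : 0 < M') by (destruct HgM; unfold M'; lra).
assert (Far := H2_sup_far n g g1 g2 M' Hderiv Hint HM').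
destruct (Nat.eq_dec n 1) as [E1 | E1];
  [apply Rle_trans with (2 * M'); [apply Far; auto | lra] |].
destruct Hr as [Hr | Hr]; [contradiction|].
destruct (Rle_dec 1 r) as [r1 | r1];
  [apply Rle_trans with (2 * M'); [apply Far; [right|]; auto | lra] |].
assert (G1 := Far 1 (or_intror Rlt_0_1) (or_intror (Rle_refl 1))).
assert (Osc := H2_oscillation_near n g g1 g2 M' Hderiv Hint ltac:(lia) HMp r ltac:(lra)).
pose proof (Rabs_triang_inv (g 1) (g r)). rewrite Rabs_minus_sym in Osc.
pose proof (Rabs_triang (g r - g 1) (g 1)). replace (g r - g 1 + g 1) with (g r) in H0 by ring.
lra.
Qed.

Lemma abs_increment_le_lipschitz (g g' : R -> R) (a b K : R) : a <= b ->
  (forall x, a <= x <= b -> derivable_pt_lim g x (g' x) /\ continuity_pt g' x) ->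
  (forall x, a < x < b -> Rabs (g' x) <= K) -> Rabs (g b - g a) <= K * (b - a).
Proof.
intros hab Hd Hb.
assert (X := abs_increment_le_of_deriv_le g g' (fct_cte 0) (fun _ => K) (fun s => K * s)
  a b 0 0 hab (Rle_refl 0)).
replace (K * (b - a)) with (0 * 0 + (K * b - K * a)) by ring.
apply (X ltac:(intros x Hx; destruct (Hd x Hx); repeat split; auto;
               [eapply derivable_pt_lim_eq; [solve_derivative | cbv beta; ring] | apply cont_const])
         (RiemannInt_P14 a b 0) ltac:(rewrite RiemannInt_P15; lra)).
intros x Hx. unfold fct_cte. rewrite Rmult_0_l, Rplus_0_l. auto.
Qed.

(* If |G(r) - G(s)| <= E on (0,r] and \int_0^r G(s)^2/s ds is finite, then
   |G(r)| <= E: otherwise G^2/s >= d^2/s near 0 for some d > 0, and the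
   logarithmic divergence of \int d^2/s contradicts the integral bound. *)
Lemma abs_le_of_log_integrable (G h : R -> R) (r E L : R) : 0 < r ->
  (forall s, 0 < s <= r -> Rabs (G r - G s) <= E) ->
  (forall rho, 0 < rho < r ->
     exists pr : Riemann_integrable h rho r, RiemannInt pr <= L ^ 2) ->
  (forall s, 0 < s <= r -> G s ^ 2 / s <= h s) -> Rabs (G r) <= E.
Proof.
intros rpos HE Hint Hh.
destruct (Rle_dec (Rabs (G r)) E) as [ok | nok]; auto. exfalso.
set (d := Rabs (G r) - E). assert (dpos : 0 < d) by (unfold d; lra).
assert (Hs : forall s, 0 < s <= r -> d ^ 2 / s <= h s).
{ intros s Hs. apply Rle_trans with (G s ^ 2 / s); [|auto].
  assert (d <= Rabs (G s)).
  { specialize (HE s Hs). pose proof (Rabs_triang_inv (G r) (G s)). unfold d; lra. }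
  unfold Rdiv. apply Rmult_le_compat_r. left; apply Rinv_0_lt_compat; lra.
  rewrite <- (pow2_abs (G s)). apply pow_incr. lra. }
set (rho := r * exp (- ((L ^ 2 + 1) / d ^ 2))).
assert (Hq : 0 < (L ^ 2 + 1) / d ^ 2).
{ pose proof (pow2_ge_0 L). assert (0 < d ^ 2) by (apply pow_lt; lra).
  apply Rdiv_lt_0_compat; lra. }
assert (rhopos : 0 < rho) by (unfold rho; apply Rmult_lt_0_compat; auto; apply exp_pos).
assert (rholt : rho < r).
{ unfold rho. assert (exp (- ((L ^ 2 + 1) / d ^ 2)) < 1).
  { apply Rlt_le_trans with (exp 0); [apply exp_increasing; lra | rewrite exp_0; lra]. }
  rewrite <- (Rmult_1_r r) at 2. apply Rmult_lt_compat_l; auto. }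
destruct (Hint rho (conj rhopos rholt)) as [pr Hpr].
assert (P := increment_le_of_deriv_le (fun s => d ^ 2 * ln s) (fun s => d ^ 2 / s) h
  (fun _ => 0) (fun _ => 0) rho r 1 (L ^ 2) ltac:(lra) ltac:(lra)).
assert (P' : d ^ 2 * ln r - d ^ 2 * ln rho <= 1 * L ^ 2 + (0 - 0)).
{ refine (P _ pr Hpr _).
  - intros x Hx. repeat split.
    + eapply derivable_pt_lim_eq. apply dlim_mult. apply dlim_const.
      apply derivable_pt_lim_ln; lra. cbv beta; field. lra.
    + apply cont_mult. apply cont_const.
      apply (continuity_pt_inv (fun y => y)). apply cont_id. lra.
    + apply dlim_const.
    + apply cont_const.
  - intros x Hx. rewrite Rplus_0_r, Rmult_1_l. apply Hs; lra. }
unfold rho in P'. rewrite ln_mult, ln_exp in P' by (auto; apply exp_pos).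
assert (d ^ 2 * ((L ^ 2 + 1) / d ^ 2) = L ^ 2 + 1) by (field; lra).
nra.
Qed.

(* Growth bounds near the origin for a function with a finite radial H^1
   integral, from integrating -F' <= (F'^2 s^{n-1} + s^{1-n} w(s))/2 over [s,1]
   for a suitable weight w. *)
Lemma one_le_Rpower_neg (t a : R) : 0 < a -> 0 < t <= 1 -> 1 <= Rpower t (- a).
Proof.
intros Ha Ht. unfold Rpower.
assert (ln t <= 0) by (rewrite <- ln_1; apply ln_le; lra).
pose proof (exp_ineq1_le (- a * ln t)). nra.
Qed.

Lemma growth_bound_dim2 (F dF : R -> R) (L a : R) : 0 < a ->
  (forall s, 0 < s -> derivable_pt_lim F s (dF s) /\ continuity_pt dF s) ->
  (forall b c, 0 < b -> b <= c -> exists pr : Riemann_integrable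
     (fun r => (F r ^ 2 + dF r ^ 2) * r ^ 1) b c, RiemannInt pr <= L ^ 2) ->
  forall s, 0 < s <= 1 -> F s <= (Rabs (F 1) + L ^ 2 / 2 + / (2 * a)) * Rpower s (- a).
Proof.
intros apos Hd Hint s Hs.
assert (Em : forall t, 0 < t -> Rpower t (- a - 1) = Rpower t (- a) * / t).
{ intros t Ht. replace (- a - 1) with (- a + - (1)) by ring.
  rewrite Rpower_plus, (Rpower_Ropp t 1), Rpower_1; auto. }
destruct (Hint s 1 ltac:(lra) ltac:(lra)) as [pr Hpr].
assert (X := increment_le_of_deriv_le (fun t => - F t) (fun t => - dF t)
  (fun r => (F r ^ 2 + dF r ^ 2) * r ^ 1) (fun t => / 2 * Rpower t (- a - 1))
  (fun t => - / (2 * a) * Rpower t (- a)) s 1 (/ 2) (L ^ 2) ltac:(lra) ltac:(lra)).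
assert (Y : - F 1 - - F s <= / 2 * L ^ 2 +
              (- / (2 * a) * Rpower 1 (- a) - - / (2 * a) * Rpower s (- a))).
{ refine (X _ pr Hpr _).
  - intros x Hx. destruct (Hd x ltac:(lra)) as (D1 & C1).
    repeat split; [apply dlim_opp; auto | apply cont_opp; auto | |].
    + eapply derivable_pt_lim_eq. apply dlim_mult. apply dlim_const.
      apply derivable_pt_lim_power; lra. cbv beta. field. lra.
    + apply cont_mult. apply cont_const.
      eapply derivable_pt_lim_continuity. apply derivable_pt_lim_power; lra.
  - intros x Hx. cbv beta.
    assert (H := two_abs_mul_le (dF x * x) 1).
    rewrite Rmult_1_r, Rabs_mult, (Rabs_right x) in H by lra.
    pose proof (Rle_abs (- dF x)) as T. rewrite Rabs_Ropp in T.
    pose proof (pow2_ge_0 (F x)). pose proof (pow2_ge_0 (dF x)).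
    rewrite Em by lra. pose proof (one_le_Rpower_neg x a apos ltac:(lra)).
    assert (/ x <= Rpower x (- a) * / x).
    { assert (0 < / x) by (apply Rinv_0_lt_compat; lra). nra. }
    assert (- dF x <= dF x ^ 2 * x / 2 + / x / 2).
    { apply (Rmult_le_reg_r (2 * x)). lra.
      replace ((dF x ^ 2 * x / 2 + / x / 2) * (2 * x)) with ((dF x * x) ^ 2 + 1)
        by (field; lra). nra. }
    assert (dF x ^ 2 * x <= (F x ^ 2 + dF x ^ 2) * x ^ 1) by (simpl; nra).
    lra. }
assert (0 < Rpower 1 (- a)) by (unfold Rpower; apply exp_pos).
assert (0 < / (2 * a)) by (apply Rinv_0_lt_compat; lra).
pose proof (Rle_abs (F 1)). pose proof (one_le_Rpower_neg s a apos Hs).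
pose proof (pow2_ge_0 L). pose proof (Rabs_pos (F 1)). nra.
Qed.

Lemma dlim_inv (x : R) : x <> 0 -> derivable_pt_lim (fun y => / y) x (- / x ^ 2).
Proof. intro H. apply is_derive_Reals. auto_derive; auto. field. auto. Qed.

Lemma growth_bound_dim3 (F dF : R -> R) (L : R) :
  (forall s, 0 < s -> derivable_pt_lim F s (dF s) /\ continuity_pt dF s) ->
  (forall b c, 0 < b -> b <= c -> exists pr : Riemann_integrable
     (fun r => (F r ^ 2 + dF r ^ 2) * r ^ 2) b c, RiemannInt pr <= L ^ 2) ->
  forall s, 0 < s <= 1 -> F s * sqrt s <= Rabs (F 1) + (L ^ 2 + 1) / 2.
Proof.
intros Hd Hint s Hs.
set (w := sqrt s). assert (wp : 0 < w) by (apply sqrt_lt_R0; lra).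
assert (ww : w * w = s) by (apply sqrt_sqrt; lra).
assert (w1 : w <= 1) by (unfold w; rewrite <- sqrt_1; apply sqrt_le_1_alt; lra).
destruct (Hint s 1 ltac:(lra) ltac:(lra)) as [pr Hpr].
assert (X := increment_le_of_deriv_le (fun t => - F t) (fun t => - dF t)
  (fun r => (F r ^ 2 + dF r ^ 2) * r ^ 2) (fun t => w / 2 * / t ^ 2)
  (fun t => - (w / 2) * / t) s 1 (/ (2 * w)) (L ^ 2) ltac:(lra)
  ltac:(left; apply Rinv_0_lt_compat; lra)).
assert (Y : - F 1 - - F s <= / (2 * w) * L ^ 2 + (- (w / 2) * / 1 - - (w / 2) * / s)).
{ refine (X _ pr Hpr _).
  - intros x Hx. destruct (Hd x ltac:(lra)) as (D1 & C1).
    repeat split; [apply dlim_opp; auto | apply cont_opp; auto | |].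
    + eapply derivable_pt_lim_eq. apply dlim_mult. apply dlim_const.
      apply dlim_inv; lra. cbv beta; field; lra.
    + apply cont_mult. apply cont_const. apply (continuity_pt_inv (fun y => y ^ 2)).
      apply cont_pow, cont_id. apply pow_nonzero; lra.
  - intros x Hx. cbv beta.
    assert (H := two_abs_mul_le (dF x * x) (w / x)).
    replace (dF x * x * (w / x)) with (dF x * w) in H by (field; lra).
    rewrite Rabs_mult, (Rabs_right w) in H by lra.
    pose proof (Rle_abs (- dF x)) as T. rewrite Rabs_Ropp in T.
    pose proof (pow2_ge_0 (F x)). pose proof (pow2_ge_0 (dF x)).
    assert ((dF x * x) ^ 2 <= (F x ^ 2 + dF x ^ 2) * x ^ 2) by nra.
    assert (- dF x * (2 * w) <= (F x ^ 2 + dF x ^ 2) * x ^ 2 + (w / x) ^ 2) by nra.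
    apply (Rmult_le_reg_r (2 * w)). lra.
    replace ((/ (2 * w) * ((F x ^ 2 + dF x ^ 2) * x ^ 2) + w / 2 * / x ^ 2) * (2 * w))
      with ((F x ^ 2 + dF x ^ 2) * x ^ 2 + (w / x) ^ 2) by (field; lra). lra. }
assert (E : / (2 * w) * L ^ 2 + (- (w / 2) * / 1 - - (w / 2) * / s) <= (L ^ 2 + 1) / (2 * w)).
{ rewrite <- ww. apply (Rmult_le_reg_r (2 * w * w)). nra.
  replace ((/ (2 * w) * L ^ 2 + (- (w / 2) * / 1 - - (w / 2) * / (w * w))) * (2 * w * w))
    with (L ^ 2 * w + w - w ^ 3) by (field; lra).
  replace ((L ^ 2 + 1) / (2 * w) * (2 * w * w)) with (L ^ 2 * w + w) by (field; lra).
  pose proof (pow2_ge_0 L). nra. }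
pose proof (Rle_abs (F 1)). pose proof (Rabs_pos (F 1)).
assert (F s <= Rabs (F 1) + (L ^ 2 + 1) / (2 * w)) by lra.
replace ((L ^ 2 + 1) / 2) with ((L ^ 2 + 1) / (2 * w) * w) by (field; lra).
set (c := (L ^ 2 + 1) / (2 * w)) in *. nra.
Qed.

(* Near the origin (n = 2, 3, so j = n - 1 in {1,2}), F and F' are bounded
   once a crude decay s^j F <= A sqrt s, s^j F^p <= A sqrt s is known.  The
   argument works with the flux s^j F'(s), whose derivative s^j (F - F^p) is
   given by the ODE. *)
Section NearOrigin.
Variables (j p : nat) (F dF : R -> R) (L A : R).
Hypothesis Hj : (j = 1 \/ j = 2)%nat.
Hypothesis Hode : forall s, 0 < s ->
  derivable_pt_lim F s (dF s) /\
  derivable_pt_lim dF s (F s - F s ^ p - INR j / s * dF s) /\ 0 < F s.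
Hypothesis Hint : forall a b, 0 < a -> a <= b ->
  exists pr : Riemann_integrable (fun r => (F r ^ 2 + dF r ^ 2) * r ^ j) a b,
    RiemannInt pr <= L ^ 2.
Hypothesis HA : 0 <= A.
Hypothesis Hdecay : forall s, 0 < s <= 1 ->
  s ^ j * F s <= A * sqrt s /\ s ^ j * F s ^ p <= A * sqrt s.

Lemma pow_j_bounds (s : R) : 0 < s <= 1 -> s ^ 2 <= s ^ j <= s /\ 0 < s ^ j.
Proof. intros Hs. destruct Hj as [-> | ->]; simpl; nra. Qed.

Lemma flux_derivative (s : R) : 0 < s ->
  derivable_pt_lim (fun t => t ^ j * dF t) s (s ^ j * (F s - F s ^ p)) /\
  continuity_pt (fun t => t ^ j * (F t - F t ^ p)) s.
Proof.
intros Hs. destruct (Hode s Hs) as (D1 & D2 & _).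
assert (C1 := derivable_pt_lim_continuity _ _ _ D1). split.
- eapply derivable_pt_lim_eq. apply dlim_mult. apply derivable_pt_lim_pow. exact D2.
  destruct Hj as [-> | ->]; simpl; field; lra.
- apply cont_mult. apply cont_pow, cont_id. unfold Rminus. solve_continuity. apply cont_pow; auto.
Qed.

(* A bound |(s^j F')'| <= K on (0,r] gives |r^j F'(r)| <= K r: the flux
   cannot tend to a nonzero constant at 0, since (s^j F')^2/s is integrable. *)
Lemma flux_bound (r K : R) : 0 < r <= 1 ->
  (forall t, 0 < t <= r -> Rabs (t ^ j * (F t - F t ^ p)) <= K) ->
  Rabs (r ^ j * dF r) <= K * r.
Proof.
intros Hr HK.
assert (K0 : 0 <= K) by (specialize (HK r ltac:(lra)); pose proof (Rabs_pos (r ^ j * (F r - F r ^ p))); lra).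
apply (abs_le_of_log_integrable (fun s => s ^ j * dF s) (fun s => (F s ^ 2 + dF s ^ 2) * s ^ j)
         r (K * r) L); [lra | | | ].
- intros s Hs. destruct (Req_dec s r) as [-> | ns].
  + rewrite Rminus_diag, Rabs_R0. nra.
  + assert (X := abs_increment_le_lipschitz (fun t => t ^ j * dF t)
      (fun t => t ^ j * (F t - F t ^ p)) s r K ltac:(lra)
      ltac:(intros x Hx; apply flux_derivative; lra) ltac:(intros x Hx; apply HK; lra)).
    cbv beta in X. nra.
- intros rho Hrho. apply Hint; lra.
- intros s Hs. pose proof (pow2_ge_0 (F s)). pose proof (pow2_ge_0 (dF s)).
  destruct Hj as [-> | ->].
  + replace ((s ^ 1 * dF s) ^ 2 / s) with (s * dF s ^ 2) by (field; lra). simpl. nra.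
  + replace ((s ^ 2 * dF s) ^ 2 / s) with (s ^ 3 * dF s ^ 2) by (field; lra). simpl.
    assert (s * (s * (s * 1)) <= s * (s * 1)) by nra. nra.
Qed.

Lemma deriv_sqrt_bound (r : R) : 0 < r <= 1 -> Rabs (dF r) * sqrt r <= 2 * A.
Proof.
intros Hr.
assert (Y : Rabs (r ^ j * dF r) <= 2 * A * sqrt r * r).
{ apply flux_bound; auto. intros t Ht. destruct (Hdecay t ltac:(lra)) as [U1 U2].
  destruct (Hode t ltac:(lra)) as (_ & _ & Fp).
  assert (0 < t ^ j) by (apply pow_lt; lra).
  assert (0 < F t ^ p) by (apply pow_lt; lra).
  assert (sqrt t <= sqrt r) by (apply sqrt_le_1_alt; lra).
  rewrite Rabs_mult, Rabs_right by lra.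
  pose proof (Rabs_triang (F t) (- F t ^ p)) as T.
  rewrite Rabs_Ropp, (Rabs_right (F t)), (Rabs_right (F t ^ p)) in T by lra.
  unfold Rminus. nra. }
rewrite Rabs_mult, (Rabs_right (r ^ j)) in Y by (left; apply pow_lt; lra).
destruct (pow_j_bounds r Hr) as [[R1 R2] R3].
pose proof (sqrt_lt_R0 r ltac:(lra)). pose proof (sqrt_sqrt r ltac:(lra)).
pose proof (Rabs_pos (dF r)).
assert (r ^ 2 * Rabs (dF r) <= 2 * A * sqrt r * r) by nra.
assert (r * (Rabs (dF r) * sqrt r) <= r * (2 * A)).
{ apply (Rmult_le_reg_r (sqrt r)); auto. simpl in *. nra. }
apply (Rmult_le_reg_l r); lra.
Qed.

(* Second pass: integrating |F'| <= 2A/sqrt s bounds F on (0,1]. *)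
Lemma F_bound_near (r : R) : 0 < r <= 1 -> 0 < F r <= Rabs (F 1) + 4 * A.
Proof.
intros Hr. split; [apply Hode; lra|].
assert (X := increment_le_of_deriv_le (fun s => - F s) (fun s => - dF s) (fct_cte 0)
  (fun t => 2 * A * / sqrt t) (fun t => 4 * A * sqrt t) r 1 0 0 ltac:(lra) (Rle_refl 0)).
assert (Y : - F 1 - - F r <= 0 * 0 + (4 * A * sqrt 1 - 4 * A * sqrt r)).
{ refine (X _ (RiemannInt_P14 r 1 0) ltac:(rewrite RiemannInt_P15; lra) _).
  - intros x Hx. destruct (Hode x ltac:(lra)) as (D1 & D2 & _).
    pose proof (sqrt_lt_R0 x ltac:(lra)).
    repeat split; [apply dlim_opp; auto | apply cont_opp; eapply derivable_pt_lim_continuity; eauto | |].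
    + eapply derivable_pt_lim_eq. apply dlim_mult. apply dlim_const.
      apply derivable_pt_lim_sqrt; lra. cbv beta; field; lra.
    + apply cont_mult. apply cont_const. apply (continuity_pt_inv sqrt); [|lra].
      eapply derivable_pt_lim_continuity. apply derivable_pt_lim_sqrt; lra.
  - intros x Hx. unfold fct_cte. pose proof (deriv_sqrt_bound x ltac:(lra)).
    pose proof (sqrt_lt_R0 x ltac:(lra)).
    pose proof (Rle_abs (- dF x)) as T. rewrite Rabs_Ropp in T.
    assert (- dF x * sqrt x <= 2 * A) by nra.
    apply (Rmult_le_reg_r (sqrt x)); auto.
    rewrite Rmult_0_l, Rplus_0_l, Rmult_assoc, Rinv_l; lra. }
rewrite sqrt_1 in Y. pose proof (sqrt_pos r). pose proof (Rle_abs (F 1)).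
assert (0 <= 4 * A * sqrt r) by (apply Rmult_le_pos; lra). lra.
Qed.

(* Third pass: with F bounded, the flux bound gives F' bounded. *)
Lemma near_origin_bounded :
  exists B, forall r, 0 < r <= 1 -> Rabs (F r) <= B /\ Rabs (dF r) <= B.
Proof.
set (B2 := Rabs (F 1) + 4 * A).
set (A2 := B2 + B2 ^ p).
assert (HB2 : 0 <= B2) by (unfold B2; pose proof (Rabs_pos (F 1)); lra).
assert (HB2p : 0 <= B2 ^ p) by (apply pow_le; lra).
exists A2. intros r Hr. destruct (F_bound_near r Hr) as [P1 P2]. split.
{ rewrite Rabs_right; unfold A2, B2 in *; lra. }
assert (Y : Rabs (r ^ j * dF r) <= A2 * r * r).
{ apply flux_bound; auto. intros t Ht.
  destruct (F_bound_near t ltac:(lra)) as [Q1 Q2]. destruct (pow_j_bounds t ltac:(lra)) as [[R1 R2] R3].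
  assert (0 < F t ^ p) by (apply pow_lt; lra).
  assert (F t ^ p <= B2 ^ p) by (apply pow_incr; unfold B2; lra).
  rewrite Rabs_mult, Rabs_right by lra.
  apply Rle_trans with (t ^ j * (F t + F t ^ p)).
  - apply Rmult_le_compat_l; [lra|].
    pose proof (Rabs_triang (F t) (- F t ^ p)) as T.
    rewrite Rabs_Ropp, (Rabs_right (F t)), (Rabs_right (F t ^ p)) in T by lra.
    unfold Rminus. lra.
  - assert (F t + F t ^ p <= A2) by (unfold A2, B2 in *; lra). nra. }
rewrite Rabs_mult, (Rabs_right (r ^ j)) in Y by (left; apply pow_lt; lra).
destruct (pow_j_bounds r Hr) as [[R1 R2] R3]. pose proof (Rabs_pos (dF r)).
assert (r ^ 2 * Rabs (dF r) <= A2 * r ^ 2) by (simpl in *; nra).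
apply (Rmult_le_reg_l (r ^ 2)). apply pow_lt; lra. lra.
Qed.

End NearOrigin.

(* The crude decay required by [near_origin_bounded], in dimension 2 (any
   power p >= 1, via the growth bound with a = 1/(2p)) ... *)
Lemma decay_dim2 (F dF : R -> R) (L : R) (p : nat) : (1 <= p)%nat ->
  (forall s, 0 < s -> derivable_pt_lim F s (dF s) /\ continuity_pt dF s /\ 0 < F s) ->
  (forall b c, 0 < b -> b <= c -> exists pr : Riemann_integrable
     (fun r => (F r ^ 2 + dF r ^ 2) * r ^ 1) b c, RiemannInt pr <= L ^ 2) ->
  exists A, 0 <= A /\ forall s, 0 < s <= 1 ->
    s ^ 1 * F s <= A * sqrt s /\ s ^ 1 * F s ^ p <= A * sqrt s.
Proof.
intros Hp Hd Hint.
assert (Pp : 1 <= INR p) by (apply (le_INR 1); auto).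
set (a := / (2 * INR p)).
assert (apos : 0 < a) by (unfold a; apply Rinv_0_lt_compat; lra).
set (A0 := Rabs (F 1) + L ^ 2 / 2 + / (2 * a)).
assert (A0p : 0 <= A0).
{ unfold A0. pose proof (pow2_ge_0 L). pose proof (Rabs_pos (F 1)).
  assert (0 < / (2 * a)) by (apply Rinv_0_lt_compat; lra). lra. }
assert (HA0p : 0 <= A0 ^ p) by (apply pow_le; auto).
exists (A0 + A0 ^ p). split; [lra|].
intros s Hs.
assert (FE := growth_bound_dim2 F dF L a apos ltac:(intros t Ht; destruct (Hd t Ht); tauto)
                Hint s Hs). fold A0 in FE.
destruct (Hd s ltac:(lra)) as (_ & _ & Fp).
set (E := Rpower s (- a)) in *.
assert (E1 : 1 <= E) by (apply one_le_Rpower_neg; auto).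
assert (Ep : E ^ p = / sqrt s).
{ unfold E. rewrite <- Rpower_pow by (unfold Rpower; apply exp_pos).
  rewrite Rpower_mult. replace (- a * INR p) with (- / 2) by (unfold a; field; lra).
  rewrite Rpower_Ropp, Rpower_sqrt; lra. }
assert (ws : s * / sqrt s = sqrt s).
{ pose proof (sqrt_lt_R0 s ltac:(lra)). rewrite <- (sqrt_sqrt s) at 1 by lra. field. lra. }
assert (EEp : E <= E ^ p) by (rewrite <- (pow_1 E) at 1; apply Rle_pow; auto).
pose proof (sqrt_pos s).
simpl. rewrite Rmult_1_r. split.
- apply Rle_trans with (s * (A0 * / sqrt s)).
  + apply Rmult_le_compat_l; [lra|]. rewrite <- Ep. nra.
  + replace (s * (A0 * / sqrt s)) with (A0 * (s * / sqrt s)) by ring. rewrite ws. nra.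
- assert (F s ^ p <= (A0 * E) ^ p) by (apply pow_incr; lra).
  rewrite Rpow_mult_distr, Ep in H0.
  apply Rle_trans with (s * (A0 ^ p * / sqrt s)); [apply Rmult_le_compat_l; lra|].
  replace (s * (A0 ^ p * / sqrt s)) with (A0 ^ p * (s * / sqrt s)) by ring. rewrite ws. nra.
Qed.

Lemma decay_dim3 (F dF : R -> R) (L : R) :
  (forall s, 0 < s -> derivable_pt_lim F s (dF s) /\ continuity_pt dF s /\ 0 < F s) ->
  (forall b c, 0 < b -> b <= c -> exists pr : Riemann_integrable
     (fun r => (F r ^ 2 + dF r ^ 2) * r ^ 2) b c, RiemannInt pr <= L ^ 2) ->
  exists A, 0 <= A /\ forall s, 0 < s <= 1 ->
    s ^ 2 * F s <= A * sqrt s /\ s ^ 2 * F s ^ 3 <= A * sqrt s.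
Proof.
intros Hd Hint.
set (A0 := Rabs (F 1) + (L ^ 2 + 1) / 2).
assert (A0p : 0 <= A0) by (unfold A0; pose proof (pow2_ge_0 L); pose proof (Rabs_pos (F 1)); lra).
assert (A03 : 0 <= A0 ^ 3) by (apply pow_le; lra).
exists (A0 + A0 ^ 3). split; [lra|].
intros s Hs.
assert (Fw := growth_bound_dim3 F dF L ltac:(intros t Ht; destruct (Hd t Ht); tauto) Hint s Hs).
fold A0 in Fw.
destruct (Hd s ltac:(lra)) as (_ & _ & Fp).
set (w := sqrt s) in *. assert (wp : 0 < w) by (apply sqrt_lt_R0; lra).
assert (ww : w * w = s) by (apply sqrt_sqrt; lra).
assert (w1 : w <= 1) by (unfold w; rewrite <- sqrt_1; apply sqrt_le_1_alt; lra).
replace (s ^ 2) with ((w * w) ^ 2) by (rewrite ww; ring). split.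
- replace ((w * w) ^ 2 * F s) with (w * (w * w) * (F s * w)) by ring.
  assert (0 <= w * (w * w) <= w) by nra. assert (0 <= F s * w) by nra. nra.
- replace ((w * w) ^ 2 * F s ^ 3) with (w * (F s * w) ^ 3) by ring.
  assert ((F s * w) ^ 3 <= A0 ^ 3) by (apply pow_incr; nra). nra.
Qed.

Definition radial_rhs (n k : nat) (F dF : R -> R) (r : R) : R :=
  F r - F r ^ (2 * k + 1) - INR (n - 1) / r * dF r.

Lemma ground_state_ode (n k : nat) (F dF ddF : R -> R) :
  ground_state n k F dF ddF -> forall r, dom n r ->
  derivable_pt_lim F r (dF r) /\ derivable_pt_lim dF r (radial_rhs n k F dF r) /\ 0 < F r.
Proof.
intros [Hode _] r Hr. destruct (Hode r Hr) as (D1 & D2 & P & E). repeat split; auto.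
unfold radial_rhs. replace (F r - F r ^ (2 * k + 1) - INR (n - 1) / r * dF r) with (ddF r) by lra.
auto.
Qed.

(* The far region: n = 1, or r >= 1 in dimension 2, 3.  There the weight
   r^{n-1} is at least 1 and the coefficient (n-1)/r is at most 2. *)
Definition far_region (n : nat) (r : R) : Prop := dom n r /\ (n = 1%nat \/ 1 <= r).

Lemma far_region_right (n : nat) (r x : R) : far_region n r -> r <= x -> far_region n x.
Proof. intros [[Hd | Hd] [Hr | Hr]] Hx; split; auto; (left + right); auto; lra. Qed.

Section GroundStateFar.
Variables (n k : nat) (F dF ddF : R -> R) (L : R).
Hypothesis Hn : n = 1%nat \/ n = 2%nat \/ n = 3%nat.
Hypothesis Hgs : ground_state n k F dF ddF.
Hypothesis HL : H1_le n F dF L.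

Lemma far_integral (r : R) : far_region n r ->
  exists pr : Riemann_integrable (fun r => (F r ^ 2 + dF r ^ 2) * r ^ (n - 1)) r (r + 1),
    RiemannInt pr <= L ^ 2.
Proof.
intros Hr. apply HL; [apply Hr | apply (far_region_right n r); auto; lra | lra].
Qed.

Lemma H1_density_ge_far (s : R) : far_region n s ->
  F s ^ 2 + dF s ^ 2 <= (F s ^ 2 + dF s ^ 2) * s ^ (n - 1).
Proof.
intros [_ Hs1]. assert (1 <= s ^ (n - 1)).
{ destruct Hs1 as [-> | Hs1]. simpl; lra. apply pow_R1_Rle; lra. }
pose proof (pow2_ge_0 (F s)). pose proof (pow2_ge_0 (dF s)). nra.
Qed.

Lemma ground_state_far_F (r : R) : far_region n r -> Rabs (F r) <= 2 * Rabs L.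
Proof.
intros Hr. destruct (far_integral r Hr) as [pr Hpr].
apply abs_le_of_sq_le; [apply Rabs_pos|]. rewrite pow2_abs.
replace (2 * L ^ 2) with (2 * L ^ 2 + 0) by ring.
refine (trace_unit_interval F dF _ r (L ^ 2) 2 0 ltac:(lra) _ pr Hpr _).
- intros x Hx. destruct (ground_state_ode n k F dF ddF Hgs x
    (proj1 (far_region_right n r x Hr ltac:(lra)))) as (D1 & D2 & _).
  split; [exact D1 | exact (derivable_pt_lim_continuity _ _ _ D2)].
- intros x Hx. pose proof (H1_density_ge_far x (far_region_right n r x Hr ltac:(lra))).
  pose proof (two_abs_mul_le (F x) (dF x)). pose proof (pow2_ge_0 (dF x)). lra.
Qed.

Lemma radial_rhs_far_bound (x : R) : far_region n x ->
  let B1 := 2 * Rabs L in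
  Rabs (radial_rhs n k F dF x) <= B1 + B1 ^ (2 * k + 1) + 2 * Rabs (dF x).
Proof.
intros Hx B1. assert (FB := ground_state_far_F x Hx). fold B1 in FB.
assert (Rabs (F x ^ (2 * k + 1)) <= B1 ^ (2 * k + 1)) by (apply Rabs_pow_le; auto).
assert (Rabs (INR (n - 1) / x) <= 2).
{ destruct Hx as [_ [E | E]].
  - rewrite E. simpl. unfold Rdiv. rewrite Rmult_0_l, Rabs_R0. lra.
  - assert (INR (n - 1) <= 2) by (destruct Hn as [-> | [-> | ->]]; simpl; lra).
    rewrite Rabs_right.
    + apply (Rmult_le_reg_r x); [lra|]. unfold Rdiv. rewrite Rmult_assoc, Rinv_l by lra. nra.
    + unfold Rdiv. apply Rle_ge, Rmult_le_pos; [apply pos_INR | left; apply Rinv_0_lt_compat; lra]. }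
unfold radial_rhs, Rminus.
pose proof (Rabs_triang (F x + - F x ^ (2 * k + 1)) (- (INR (n - 1) / x * dF x))) as T1.
pose proof (Rabs_triang (F x) (- F x ^ (2 * k + 1))) as T2.
rewrite Rabs_Ropp in T1, T2. rewrite Rabs_mult in T1.
assert (Rabs (INR (n - 1) / x) * Rabs (dF x) <= 2 * Rabs (dF x))
  by (apply Rmult_le_compat_r; auto; apply Rabs_pos).
lra.
Qed.

Lemma radial_rhs_continuous (x : R) : dom n x -> continuity_pt (radial_rhs n k F dF) x.
Proof.
intros Hx. destruct (ground_state_ode n k F dF ddF Hgs x Hx) as (D1 & D2 & _).
assert (C1 := derivable_pt_lim_continuity _ _ _ D1).
assert (C2 := derivable_pt_lim_continuity _ _ _ D2).
unfold radial_rhs, Rminus. apply cont_plus; [apply cont_plus; [auto | apply cont_opp, cont_pow; auto]|].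
apply cont_opp. destruct Hx as [E1 | Hx].
- apply continuity_pt_ext with (fun _ => 0); [|apply cont_const].
  intro y. rewrite E1. simpl. unfold Rdiv. ring.
- apply cont_mult; [apply cont_mult; [apply cont_const|] | auto].
  apply (continuity_pt_inv (fun y => y)); [apply cont_id | lra].
Qed.

(* |F'| is bounded in the far region: the trace estimate applied to F',
   whose derivative grows at most linearly in |F'|. *)
Lemma ground_state_far_dF (r : R) : far_region n r ->
  let BB := 2 * Rabs L + (2 * Rabs L) ^ (2 * k + 1) in
  Rabs (dF r) <= (5 + BB) * L ^ 2 + BB + 1.
Proof.
intros Hr BB. destruct (far_integral r Hr) as [pr Hpr].
assert (BBp : 0 <= BB) by (unfold BB; pose proof (Rabs_pos L);
  pose proof (pow_le (2 * Rabs L) (2 * k + 1) ltac:(lra)); lra).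
assert (dF r ^ 2 <= (5 + BB) * L ^ 2 + BB).
{ refine (trace_unit_interval dF (radial_rhs n k F dF) _ r (L ^ 2) (5 + BB) BB ltac:(lra) _ pr Hpr _).
  - intros x Hx. assert (Dx := proj1 (far_region_right n r x Hr ltac:(lra))).
    split; [apply (ground_state_ode n k F dF ddF Hgs x Dx) | apply radial_rhs_continuous; auto].
  - intros x Hx. assert (Fx := far_region_right n r x Hr ltac:(lra)).
    pose proof (H1_density_ge_far x Fx). assert (Hdd := radial_rhs_far_bound x Fx). fold BB in Hdd.
    pose proof (two_abs_mul_le (dF x) 1) as T. rewrite Rmult_1_r in T. rewrite Rabs_mult.
    assert (Rabs (dF x) * Rabs (radial_rhs n k F dF x) <= Rabs (dF x) * (BB + 2 * Rabs (dF x)))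
      by (apply Rmult_le_compat_l; auto; apply Rabs_pos).
    assert (Rabs (dF x) * Rabs (dF x) = dF x ^ 2) by (rewrite <- Rabs_mult, Rabs_right; [ring|];
      pose proof (pow2_ge_0 (dF x)); simpl in *; lra).
    pose proof (pow2_ge_0 (F x)). pose proof (Rabs_pos (dF x)). nra. }
rewrite <- (pow2_abs (dF r)) in H. pose proof (Rabs_pos (dF r)). nra.
Qed.

End GroundStateFar.

(* The ground state F and its derivative are bounded on the whole domain:
   in the far region directly, near the origin through the crude decay. *)
Lemma ground_state_bounded (n k : nat) (F dF ddF : R -> R) :
  (n = 1%nat \/ n = 2%nat \/ n = 3%nat) -> (1 <= k)%nat -> (n = 3%nat -> k = 1%nat) ->
  ground_state n k F dF ddF ->
  exists B, 0 <= B /\ forall r, dom n r -> Rabs (F r) <= B /\ Rabs (dF r) <= B.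
Proof.
intros Hn Hk Hk3 Hgs. pose proof Hgs as [_ [_ [L HL]]].
set (BB := 2 * Rabs L + (2 * Rabs L) ^ (2 * k + 1)).
set (B1 := BB + (5 + BB) * L ^ 2 + BB + 1).
assert (HBB : 2 * Rabs L <= BB /\ 0 <= BB).
{ pose proof (Rabs_pos L). pose proof (pow_le (2 * Rabs L) (2 * k + 1) ltac:(lra)).
  unfold BB; lra. }
assert (0 <= (5 + BB) * L ^ 2) by (apply Rmult_le_pos; [lra | apply pow2_ge_0]).
assert (B1p : 0 <= B1) by (unfold B1; lra).
assert (Far : forall r, far_region n r -> Rabs (F r) <= B1 /\ Rabs (dF r) <= B1).
{ intros r Hr. pose proof (ground_state_far_F n k F dF ddF L Hn Hgs HL r Hr).
  pose proof (ground_state_far_dF n k F dF ddF L Hn Hgs HL r Hr) as HdF. cbv zeta in HdF.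
  fold BB in HdF. unfold B1; split; lra. }
destruct (Nat.eq_dec n 1) as [E1 | E1].
{ exists B1. split; [exact B1p|]. intros r Hr. apply Far. split; [exact Hr | left; exact E1]. }
assert (DD : forall s, 0 < s -> derivable_pt_lim F s (dF s) /\
   derivable_pt_lim dF s (F s - F s ^ (2 * k + 1) - INR (n - 1) / s * dF s) /\ 0 < F s)
  by (intros s Hs; apply (ground_state_ode n k F dF ddF Hgs); right; auto).
assert (DD1 : forall s, 0 < s -> derivable_pt_lim F s (dF s) /\ continuity_pt dF s /\ 0 < F s).
{ intros s Hs. destruct (DD s Hs) as (D1 & D2 & P).
  repeat split; auto. exact (derivable_pt_lim_continuity _ _ _ D2). }
assert (Hint : forall a b, 0 < a -> a <= b -> exists pr : Riemann_integrable
  (fun r => (F r ^ 2 + dF r ^ 2) * r ^ (n - 1)) a b, RiemannInt pr <= L ^ 2)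
  by (intros a b Ha Hab; apply HL; auto; right; lra).
assert (Hj : (n - 1 = 1 \/ n - 1 = 2)%nat) by lia.
assert (Decay : exists A, 0 <= A /\ forall s, 0 < s <= 1 ->
          s ^ (n - 1) * F s <= A * sqrt s /\ s ^ (n - 1) * F s ^ (2 * k + 1) <= A * sqrt s).
{ destruct Hn as [-> | [-> | ->]]; [contradiction | |].
  - apply (decay_dim2 F dF L (2 * k + 1)); auto. lia.
  - rewrite (Hk3 eq_refl). apply (decay_dim3 F dF L); auto. }
destruct Decay as [A [HA HA']].
destruct (near_origin_bounded (n - 1) (2 * k + 1) F dF L A Hj DD Hint HA HA') as [B2 HB2].
exists (B1 + Rabs B2). split; [pose proof (Rabs_pos B2); lra|].
intros r Hr. pose proof (Rle_abs B2). pose proof (Rabs_pos B2).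
destruct (Rle_dec 1 r) as [r1 | r1].
- destruct (Far r (conj Hr (or_intror r1))). split; lra.
- destruct Hr as [Hr | Hr]; [contradiction|]. destruct (HB2 r ltac:(lra)). split; lra.
Qed.

Lemma pow_diff_bound (x y K : R) (j : nat) : Rabs x <= K -> Rabs y <= K ->
  Rabs (x ^ j - y ^ j) <= INR j * K ^ (j - 1) * Rabs (x - y).
Proof.
intros Hx Hy. assert (K0 : 0 <= K) by (pose proof (Rabs_pos x); lra).
induction j as [|j IH].
- simpl. rewrite Rminus_diag, Rabs_R0. lra.
- replace (x ^ S j - y ^ S j) with (x * (x ^ j - y ^ j) + (x - y) * y ^ j) by (simpl; ring).
  eapply Rle_trans. apply Rabs_triang. rewrite !Rabs_mult.
  assert (Rabs x * Rabs (x ^ j - y ^ j) <= K * (INR j * K ^ (j - 1) * Rabs (x - y)))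
    by (apply Rmult_le_compat; auto; apply Rabs_pos).
  assert (Rabs (x - y) * Rabs (y ^ j) <= Rabs (x - y) * K ^ j)
    by (apply Rmult_le_compat_l; [apply Rabs_pos | apply Rabs_pow_le; auto]).
  replace (S j - 1)%nat with j by lia. rewrite S_INR.
  destruct j as [|j]; [simpl in *; lra|].
  replace (K * (INR (S j) * K ^ (S j - 1) * Rabs (x - y))) with (INR (S j) * K ^ S j * Rabs (x - y))
    in H by (replace (S j - 1)%nat with j by lia; simpl; ring).
  lra.
Qed.

Lemma omega_expansion (m eps : R) : 0 < m -> 0 < eps <= m / 2 ->
  0 <= m - omega m eps <= eps ^ 2 / m /\
  Rabs (1 / (2 * m) - (m - omega m eps) / eps ^ 2) <= eps ^ 2 / (2 * m ^ 3).
Proof.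
intros Hm He. unfold omega. set (om := sqrt (m ^ 2 - eps ^ 2)).
assert (Hpos : 0 < m ^ 2 - eps ^ 2) by nra.
assert (O2 : om * om = m ^ 2 - eps ^ 2) by (apply sqrt_sqrt; lra).
assert (O0 : 0 < om) by (apply sqrt_lt_R0; lra).
assert (Om : om <= m) by nra.
set (d := m - om).
assert (Dd : d * (m + om) = eps ^ 2) by (unfold d; nra).
assert (d0 : 0 < d) by (assert (0 < eps ^ 2) by (apply pow_lt; lra); unfold d in *; nra).
assert (dle : d <= eps ^ 2 / m).
{ apply (Rmult_le_reg_r m). lra. unfold Rdiv. rewrite Rmult_assoc, Rinv_l by lra. nra. }
split; [lra|].
assert (E : 1 / (2 * m) - d / eps ^ 2 = - (d / (2 * m * (m + om)))).
{ assert (0 < eps ^ 2) by (apply pow_lt; lra). rewrite <- Dd. unfold d in *. field. lra. }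
rewrite E, Rabs_Ropp, Rabs_right.
- apply Rle_trans with (d / (2 * m ^ 2)).
  + unfold Rdiv. apply Rmult_le_compat_l; [lra|]. apply Rinv_le_contravar; nra.
  + apply (Rmult_le_reg_r (2 * m ^ 2)); [nra|].
    replace (d / (2 * m ^ 2) * (2 * m ^ 2)) with d by (field; lra).
    replace (eps ^ 2 / (2 * m ^ 3) * (2 * m ^ 2)) with (eps ^ 2 / m) by (field; lra). auto.
- apply Rle_ge. unfold Rdiv. apply Rmult_le_pos; [lra|]. left; apply Rinv_0_lt_compat. nra.
Qed.

(* The constant in the O(eps^2) bound of the entries (k = j + 1). *)
Definition entry_const (m K : R) (j : nat) : R :=
  / (2 * m ^ 3) + / m + (5 * K ^ 2) ^ S j
  + 2 * INR (S j) * (INR j * (5 * K ^ 2) ^ (j - 1) * (4 * K ^ 2) * (5 * K ^ 2)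
                     + 8 * (5 * K ^ 2) ^ j * K ^ 2).

(* Write v = p A and u = eps p B, with p^{2k} = eps^2, k = j + 1.  If Vhat(R) is
   bounded, A = Vhat(R) + O(eps^2) and B is bounded, every entry of W is
   O(eps^2). *)
Section EntryEstimates.
Variables (m K eps p Vh A B : R) (j : nat).
Hypothesis Hm : 0 < m.
Hypothesis HK : 1 <= K.
Hypothesis Heps : 0 < eps <= 1.
Hypothesis Hepsm : eps <= m / 2.
Hypothesis Hp : p ^ (2 * S j) = eps ^ 2.
Hypothesis HVh : Rabs Vh <= K.
Hypothesis HAV : Rabs (A - Vh) <= K * eps ^ 2.
Hypothesis HB : Rabs B <= K.

Let e := eps ^ 2.
Let M5 := 5 * K ^ 2.
Let kk := INR (S j).
(* D = (v^2 - u^2)/p^2 and its limit Y = Vhat(R)^2. *)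
Let D := A ^ 2 - e * B ^ 2.
Let Y := Vh ^ 2.
Let vv := p * A.
Let uu := eps * p * B.
Let f := (vv ^ 2 - uu ^ 2) ^ S j.
Let fp := INR (S j) * (vv ^ 2 - uu ^ 2) ^ j.
Let om := omega m eps.
Let c := entry_const m K j.

Lemma e_bounds : 0 < e <= 1.
Proof. unfold e. split; [apply pow_lt; lra | nra]. Qed.

Lemma nonlinearity_identities :
  f = e * (D * D ^ j) /\
  fp * vv ^ 2 = kk * e * D ^ j * A ^ 2 /\
  fp * vv * uu = kk * e * D ^ j * A * B * eps /\
  fp * uu ^ 2 = kk * e * D ^ j * e * B ^ 2.
Proof.
assert (Hvu : vv ^ 2 - uu ^ 2 = p ^ 2 * D) by (unfold vv, uu, D, e; ring).
assert (Hp2 : (p ^ 2) ^ S j = e) by (rewrite <- pow_mult; exact Hp).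
assert (Hq : (p ^ 2 * D) ^ j * p ^ 2 = e * D ^ j)
  by (rewrite Rpow_mult_distr, <- Hp2; simpl; ring).
unfold f, fp. rewrite Hvu. fold kk. repeat split.
- rewrite Rpow_mult_distr, Hp2. simpl. ring.
- transitivity (kk * ((p ^ 2 * D) ^ j * p ^ 2) * A ^ 2); [unfold vv; ring | rewrite Hq; ring].
- transitivity (kk * ((p ^ 2 * D) ^ j * p ^ 2) * A * B * eps); [unfold vv, uu; ring | rewrite Hq; ring].
- transitivity (kk * ((p ^ 2 * D) ^ j * p ^ 2) * e * B ^ 2); [unfold uu, e; ring | rewrite Hq; ring].
Qed.

Lemma amplitude_bounds :
  Rabs A <= 2 * K /\ Rabs Y <= M5 /\ Rabs D <= M5 /\
  Rabs (Y - A ^ 2) <= 3 * K ^ 2 * e /\ Rabs (D - Y) <= 4 * K ^ 2 * e.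
Proof.
destruct e_bounds as [e0 e1]. fold e in HAV.
assert (HA2 : Rabs A <= 2 * K).
{ pose proof (Rabs_triang (A - Vh) Vh). replace (A - Vh + Vh) with A in H by ring. nra. }
assert (HB2 : Rabs B ^ 2 <= K ^ 2) by (apply pow_incr; split; [apply Rabs_pos | auto]).
assert (HYA : Rabs (Y - A ^ 2) <= 3 * K ^ 2 * e).
{ unfold Y. replace (Vh ^ 2 - A ^ 2) with (- ((A - Vh) * (A + Vh))) by ring.
  rewrite Rabs_Ropp, Rabs_mult. pose proof (Rabs_triang A Vh).
  pose proof (Rabs_pos (A - Vh)). pose proof (Rabs_pos (A + Vh)).
  apply Rle_trans with (K * e * (3 * K)); [apply Rmult_le_compat; auto; lra | simpl; lra]. }
repeat split; auto.
- unfold Y, M5. rewrite <- RPow_abs. pose proof (Rabs_pos Vh).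
  assert (Rabs Vh ^ 2 <= K ^ 2) by (apply pow_incr; lra). pose proof (pow2_ge_0 K). lra.
- unfold D, M5. unfold Rminus. eapply Rle_trans; [apply Rabs_triang|].
  rewrite Rabs_Ropp, Rabs_mult, (Rabs_right e), <- !RPow_abs by lra.
  assert (Rabs A ^ 2 <= (2 * K) ^ 2) by (apply pow_incr; split; [apply Rabs_pos | auto]).
  pose proof (pow2_ge_0 (Rabs B)). nra.
- replace (D - Y) with (- (Y - A ^ 2) - e * B ^ 2) by (unfold D; ring).
  unfold Rminus. eapply Rle_trans; [apply Rabs_triang|].
  rewrite Rabs_Ropp, Rabs_Ropp, Rabs_mult, (Rabs_right e), <- RPow_abs by lra.
  unfold Rminus in HYA. assert (e * Rabs B ^ 2 <= e * K ^ 2) by (apply Rmult_le_compat_l; lra).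
  lra.
Qed.

Lemma entry_const_expansion :
  let Z := INR j * M5 ^ (j - 1) * (4 * K ^ 2) in
  c * e = / (2 * m ^ 3) * e + / m * e + M5 ^ S j * e
          + 2 * kk * (Z * M5) * e + 16 * kk * (M5 ^ j * K ^ 2) * e /\
  0 <= / (2 * m ^ 3) * e /\ 0 <= / m * e /\ 0 <= M5 ^ S j * e /\
  0 <= kk * (Z * M5) * e /\ 0 <= kk * (M5 ^ j * K ^ 2) * e /\ 0 <= M5 ^ j.
Proof.
intros Z. destruct e_bounds as [e0 e1].
assert (0 <= M5) by (unfold M5; pose proof (pow2_ge_0 K); lra).
assert (0 <= M5 ^ j) by (apply pow_le; auto).
assert (0 <= kk) by apply pos_INR.
assert (0 <= Z) by (unfold Z; repeat apply Rmult_le_pos;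
  first [apply pos_INR | apply pow_le; auto | apply pow2_ge_0 | lra]).
repeat split.
- unfold c, entry_const. fold M5 kk. unfold Z. ring.
- apply Rmult_le_pos; [|lra]. left; apply Rinv_0_lt_compat.
  assert (0 < m ^ 3) by (apply pow_lt; lra). lra.
- apply Rmult_le_pos; [left; apply Rinv_0_lt_compat|]; lra.
- apply Rmult_le_pos; [apply pow_le|]; lra.
- apply Rmult_le_pos; [apply Rmult_le_pos; [|apply Rmult_le_pos] |]; lra.
- pose proof (pow2_ge_0 K).
  apply Rmult_le_pos; [apply Rmult_le_pos; [|apply Rmult_le_pos] |]; lra.
- auto.
Qed.

Lemma power_bounds :
  Rabs (D ^ j) <= M5 ^ j /\ Rabs (D ^ S j) <= M5 ^ S j /\
  Rabs (D ^ S j - Y ^ S j) <= kk * M5 ^ j * (4 * K ^ 2) * e /\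
  Rabs (Y ^ j - D ^ j) <= INR j * M5 ^ (j - 1) * (4 * K ^ 2) * e.
Proof.
destruct amplitude_bounds as (HA2 & HY & HD & HYA & HDY).
assert (0 <= M5 ^ j) by (apply pow_le; unfold M5; pose proof (pow2_ge_0 K); lra).
repeat split; try (apply Rabs_pow_le; auto).
- eapply Rle_trans; [apply pow_diff_bound; eauto|].
  replace (S j - 1)%nat with j by lia. fold kk.
  rewrite (Rmult_assoc _ (4 * K ^ 2) e).
  apply Rmult_le_compat_l; [apply Rmult_le_pos; auto; apply pos_INR | auto].
- eapply Rle_trans; [apply pow_diff_bound; eauto|].
  rewrite Rabs_minus_sym, (Rmult_assoc _ (4 * K ^ 2) e).
  apply Rmult_le_compat_l; [|auto].
  apply Rmult_le_pos; [apply pos_INR | apply pow_le; unfold M5; pose proof (pow2_ge_0 K); lra].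
Qed.

Lemma W13_bound :
  Rabs (1 / (2 * m) - Vh ^ (2 * S j) - (m - om - f) / eps ^ 2) <= c * eps ^ 2.
Proof.
destruct (omega_expansion m eps Hm ltac:(lra)) as [_ O3]. fold om e in O3.
destruct power_bounds as (_ & _ & HdSj & _). destruct e_bounds as [e0 e1].
destruct entry_const_expansion as (Hc & P1 & P2 & P3 & P4 & P5 & P6). fold e. rewrite Hc.
destruct nonlinearity_identities as (E1 & _).
replace (1 / (2 * m) - Vh ^ (2 * S j) - (m - om - f) / e) with
  ((1 / (2 * m) - (m - om) / e) + (D ^ S j - Y ^ S j) + 0)
  by (rewrite E1, pow_mult; unfold Y; simpl; field; lra).
eapply Rle_trans; [apply Rabs_triang3|]. rewrite Rabs_R0.
assert (e / (2 * m ^ 3) = / (2 * m ^ 3) * e) by (unfold Rdiv; ring).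
lra.
Qed.

Lemma W24_bound : Rabs (om - m - f) <= c * eps ^ 2.
Proof.
destruct (omega_expansion m eps Hm ltac:(lra)) as [[O1 O2] _]. fold om e in O1, O2.
destruct power_bounds as (_ & HDSj & _). destruct e_bounds as [e0 e1].
destruct entry_const_expansion as (Hc & P1 & P2 & P3 & P4 & P5 & P6). fold e. rewrite Hc.
destruct nonlinearity_identities as (E1 & _).
replace (om - m - f) with (- (m - om) + - (e * D ^ S j) + 0) by (rewrite E1; simpl; ring).
eapply Rle_trans; [apply Rabs_triang3|].
rewrite Rabs_R0, !Rabs_Ropp, Rabs_right, Rabs_mult, (Rabs_right e) by lra.
assert (e / m = / m * e) by (unfold Rdiv; ring).
assert (e * Rabs (D ^ S j) <= M5 ^ S j * e) by (rewrite Rmult_comm; apply Rmult_le_compat_r; lra).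
lra.
Qed.

Lemma W31_bound :
  Rabs (- (1 / (2 * m)) + INR (2 * S j + 1) * Vh ^ (2 * S j)
        - (om - m + f + 2 * fp * vv ^ 2) / eps ^ 2) <= c * eps ^ 2.
Proof.
destruct (omega_expansion m eps Hm ltac:(lra)) as [_ O3]. fold om e in O3.
destruct amplitude_bounds as (HA2 & HY & HD & HYA & HDY).
destruct power_bounds as (HDj & _ & HdSj & Hdj). destruct e_bounds as [e0 e1].
destruct entry_const_expansion as (Hc & P1 & P2 & P3 & P4 & P5 & P6). fold e. rewrite Hc.
set (Z := INR j * M5 ^ (j - 1) * (4 * K ^ 2)) in *.
destruct nonlinearity_identities as (E1 & E2 & _).
assert (Hk21 : INR (2 * S j + 1) = 2 * kk + 1)
  by (unfold kk; rewrite plus_INR, mult_INR; simpl; ring).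
rewrite Hk21, pow_mult. fold Y.
replace (- (1 / (2 * m)) + (2 * kk + 1) * Y ^ S j - (om - m + f + 2 * fp * vv ^ 2) / e) with
  (- (1 / (2 * m) - (m - om) / e) + - (D ^ S j - Y ^ S j)
   + 2 * kk * ((Y ^ j - D ^ j) * Y + D ^ j * (Y - A ^ 2)))
  by (replace (2 * fp * vv ^ 2) with (2 * (fp * vv ^ 2)) by ring;
      rewrite E2, E1; simpl; field; lra).
eapply Rle_trans; [apply Rabs_triang3|]. rewrite !Rabs_Ropp.
assert (0 <= kk) by apply pos_INR.
assert (Rabs (2 * kk * ((Y ^ j - D ^ j) * Y + D ^ j * (Y - A ^ 2)))
        <= 2 * kk * (Z * M5) * e + 6 * kk * (M5 ^ j * K ^ 2) * e).
{ rewrite Rabs_mult, (Rabs_right (2 * kk)) by lra.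
  replace (2 * kk * (Z * M5) * e + 6 * kk * (M5 ^ j * K ^ 2) * e)
    with (2 * kk * (Z * e * M5 + M5 ^ j * (3 * K ^ 2 * e))) by ring.
  apply Rmult_le_compat_l; [lra|]. eapply Rle_trans; [apply Rabs_triang|].
  apply Rplus_le_compat; apply Rabs_mult_le; auto. }
assert (e / (2 * m ^ 3) = / (2 * m ^ 3) * e) by (unfold Rdiv; ring).
lra.
Qed.

Lemma W32_bound : Rabs (2 * fp * vv * uu / eps) <= c * eps ^ 2.
Proof.
destruct amplitude_bounds as (HA2 & _). destruct power_bounds as (HDj & _).
destruct e_bounds as [e0 e1].
destruct entry_const_expansion as (Hc & P1 & P2 & P3 & P4 & P5 & P6). fold e. rewrite Hc.
destruct nonlinearity_identities as (_ & _ & E3 & _).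
replace (2 * fp * vv * uu / eps) with (2 * kk * e * (D ^ j * A * B))
  by (replace (2 * fp * vv * uu) with (2 * (fp * vv * uu)) by ring; rewrite E3; field; lra).
assert (0 <= kk) by apply pos_INR.
rewrite Rabs_mult, (Rabs_right (2 * kk * e)) by nra.
assert (Rabs (D ^ j * A * B) <= M5 ^ j * (2 * K) * K)
  by (apply Rabs_mult_le; auto; apply Rabs_mult_le; auto).
assert (2 * kk * e * Rabs (D ^ j * A * B) <= 2 * kk * e * (M5 ^ j * (2 * K) * K))
  by (apply Rmult_le_compat_l; nra).
lra.
Qed.

Lemma W42_bound : Rabs (m - om + f - 2 * fp * uu ^ 2) <= c * eps ^ 2.
Proof.
destruct (omega_expansion m eps Hm ltac:(lra)) as [[O1 O2] _]. fold om e in O1, O2.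
destruct power_bounds as (HDj & HDSj & _). destruct e_bounds as [e0 e1].
destruct entry_const_expansion as (Hc & P1 & P2 & P3 & P4 & P5 & P6). fold e. rewrite Hc.
destruct nonlinearity_identities as (E1 & _ & _ & E4).
replace (m - om + f - 2 * fp * uu ^ 2)
  with ((m - om) + e * D ^ S j + - (2 * kk * e * e * (D ^ j * B ^ 2)))
  by (replace (2 * fp * uu ^ 2) with (2 * (fp * uu ^ 2)) by ring; rewrite E4, E1; simpl; ring).
eapply Rle_trans; [apply Rabs_triang3|].
assert (0 <= kk) by apply pos_INR.
rewrite Rabs_Ropp, (Rabs_right (m - om)), Rabs_mult, (Rabs_right e),
  Rabs_mult, (Rabs_right (2 * kk * e * e)) by (try apply Rle_ge; repeat apply Rmult_le_pos; lra).
assert (Rabs (D ^ j * B ^ 2) <= M5 ^ j * K ^ 2)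
  by (apply Rabs_mult_le; auto; apply Rabs_pow_le; auto).
assert (e / m = / m * e) by (unfold Rdiv; ring).
assert (e * Rabs (D ^ S j) <= M5 ^ S j * e) by (rewrite Rmult_comm; apply Rmult_le_compat_r; lra).
assert (2 * kk * e * e * Rabs (D ^ j * B ^ 2) <= 2 * kk * (M5 ^ j * K ^ 2) * e).
{ assert (0 <= Rabs (D ^ j * B ^ 2)) by apply Rabs_pos.
  assert (0 <= 2 * kk * e) by nra. assert (e * Rabs (D ^ j * B ^ 2) <= M5 ^ j * K ^ 2) by nra. nra. }
lra.
Qed.

Lemma Wmat_entries_bound (F : R -> R) (v u : R -> R) (rho : R) :
  v (rho / eps) = p * A -> u (rho / eps) = eps * p * B -> Vhat (S j) m F rho = Vh ->
  forall i l, (i < 4)%nat -> (l < 4)%nat ->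
    Rabs (Wmat (S j) m F eps v u rho i l) <= entry_const m K j * eps ^ 2.
Proof.
intros Hv Hu HVh' i l Hi Hl.
assert (Z : 0 <= c * eps ^ 2).
{ destruct entry_const_expansion as (Hc & P1 & P2 & P3 & P4 & P5 & P6). fold e. rewrite Hc. lra. }
fold c.
destruct i as [|[|[|[|i]]]]; try lia; destruct l as [|[|[|[|l]]]]; try lia;
  unfold Wmat; cbv zeta; rewrite ?Hv, ?Hu, ?HVh'; try (rewrite Rabs_R0; exact Z);
  replace (S j - 1)%nat with j by lia.
- apply W13_bound.
- apply W24_bound.
- apply W31_bound.
- apply W32_bound.
- apply W32_bound.
- apply W42_bound.
Qed.

End EntryEstimates.

Lemma sq_sum4_le (a b c d : R) : (a + b + c + d) ^ 2 <= 4 * (a ^ 2 + b ^ 2 + c ^ 2 + d ^ 2).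
Proof.
assert (4 * (a ^ 2 + b ^ 2 + c ^ 2 + d ^ 2) - (a + b + c + d) ^ 2
        = (a - b) ^ 2 + (a - c) ^ 2 + (a - d) ^ 2 + (b - c) ^ 2 + (b - d) ^ 2 + (c - d) ^ 2)
  by ring.
pose proof (pow2_ge_0 (a - b)). pose proof (pow2_ge_0 (a - c)). pose proof (pow2_ge_0 (a - d)).
pose proof (pow2_ge_0 (b - c)). pose proof (pow2_ge_0 (b - d)). pose proof (pow2_ge_0 (c - d)).
lra.
Qed.

Lemma row_sq_le (a : nat -> R) (x : nat -> R) (c : R) :
  (forall l, (l < 4)%nat -> Rabs (a l) <= c) ->
  (a 0%nat * x 0%nat + a 1%nat * x 1%nat + a 2%nat * x 2%nat + a 3%nat * x 3%nat) ^ 2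
  <= 4 * c ^ 2 * (x 0%nat ^ 2 + x 1%nat ^ 2 + x 2%nat ^ 2 + x 3%nat ^ 2).
Proof.
intros H.
assert (T : forall l, (l < 4)%nat -> (a l * x l) ^ 2 <= c ^ 2 * x l ^ 2).
{ intros l Hl. rewrite Rpow_mult_distr. apply Rmult_le_compat_r; [apply pow2_ge_0|].
  rewrite <- (pow2_abs (a l)). apply pow_incr. split; [apply Rabs_pos | auto]. }
pose proof (sq_sum4_le (a 0%nat * x 0%nat) (a 1%nat * x 1%nat) (a 2%nat * x 2%nat) (a 3%nat * x 3%nat)).
pose proof (T 0%nat ltac:(lia)). pose proof (T 1%nat ltac:(lia)).
pose proof (T 2%nat ltac:(lia)). pose proof (T 3%nat ltac:(lia)).
nra.
Qed.

Lemma sum_f_R0_four (f : nat -> R) : sum_f_R0 f 3 = f 0%nat + f 1%nat + f 2%nat + f 3%nat.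
Proof. reflexivity. Qed.

Lemma opnorm_le4_of_entries (A : nat -> nat -> R) (c : R) : 0 <= c ->
  (forall i l, (i < 4)%nat -> (l < 4)%nat -> Rabs (A i l) <= c) -> opnorm_le4 A (4 * c).
Proof.
intros Hc H z. unfold vnorm4, matvec4, cabs2. rewrite !sum_f_R0_four. cbv beta. simpl fst; simpl snd.
set (S := fst (z 0%nat) ^ 2 + snd (z 0%nat) ^ 2 + (fst (z 1%nat) ^ 2 + snd (z 1%nat) ^ 2)
          + (fst (z 2%nat) ^ 2 + snd (z 2%nat) ^ 2) + (fst (z 3%nat) ^ 2 + snd (z 3%nat) ^ 2)).
assert (Sp : 0 <= S) by (unfold S; repeat (apply Rplus_le_le_0_compat || apply pow2_ge_0)).
rewrite <- (sqrt_pow2 (4 * c)) by lra. rewrite <- sqrt_mult by (try apply pow2_ge_0; lra).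
apply sqrt_le_1_alt.
assert (Row : forall i, (i < 4)%nat -> forall x : nat -> R,
  (A i 0%nat * x 0%nat + A i 1%nat * x 1%nat + A i 2%nat * x 2%nat + A i 3%nat * x 3%nat) ^ 2
  <= 4 * c ^ 2 * (x 0%nat ^ 2 + x 1%nat ^ 2 + x 2%nat ^ 2 + x 3%nat ^ 2))
  by (intros i Hi x; apply row_sq_le; intros l Hl; apply H; auto).
pose proof (Row 0%nat ltac:(lia) (fun l => fst (z l))). pose proof (Row 0%nat ltac:(lia) (fun l => snd (z l))).
pose proof (Row 1%nat ltac:(lia) (fun l => fst (z l))). pose proof (Row 1%nat ltac:(lia) (fun l => snd (z l))).
pose proof (Row 2%nat ltac:(lia) (fun l => fst (z l))). pose proof (Row 2%nat ltac:(lia) (fun l => snd (z l))).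
pose proof (Row 3%nat ltac:(lia) (fun l => fst (z l))). pose proof (Row 3%nat ltac:(lia) (fun l => snd (z l))).
cbv beta in *. unfold S. lra.
Qed.

Lemma ansatz_rescaling (k : nat) (m eps rho : R) (F dF v u : R -> R) :
  (1 <= k)%nat -> 0 < eps ->
  let p := Rpower eps (1 / INR k) in
  v (rho / eps) = p * (Vhat k m F rho + Vtil k m F eps v rho) /\
  u (rho / eps) = eps * p * (Uhat k m dF rho + Util k m dF eps u rho) /\
  p ^ (2 * k) = eps ^ 2.
Proof.
intros Hk Heps p.
assert (pp : 0 < p) by (unfold p, Rpower; apply exp_pos).
assert (kpos : 0 < INR k) by (apply lt_0_INR; lia).
assert (Hq : Rpower eps (1 + 1 / INR k) = eps * p)
  by (unfold p; rewrite Rpower_plus, Rpower_1 by lra; ring).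
unfold Vtil, Util. fold p. rewrite Hq. repeat split; [field; lra | field; lra |].
unfold p. rewrite <- Rpower_pow by (unfold Rpower; apply exp_pos). rewrite Rpower_mult.
replace (1 / INR k * INR (2 * k)) with (INR 2) by (rewrite mult_INR; simpl; field; lra).
apply Rpower_pow. lra.
Qed.

(* A common bound for Vhat, Uhat + Util and (divided by eps^2) Vtil. *)
Definition ansatz_const (k : nat) (m BF C : R) : R :=
  (Rpower (2 * m) (- (1 / (2 * INR k))) + Rpower (2 * m) (- (1 / (2 * INR k)) - 1)) * BF
  + 3 * Rabs C + 1.

(* Vhat and Uhat are bounded because F and F' are; the remainders are
   O(eps^2) in sup norm by the Sobolev bound. *)
Lemma ansatz_amplitude_bounds (n k : nat) (m BF C eps MV MU rho : R) (F dF v u : R -> R) :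
  (n = 1%nat \/ n = 2%nat \/ n = 3%nat) -> 0 < eps <= 1 -> 0 <= BF ->
  (forall r, dom n r -> Rabs (F r) <= BF /\ Rabs (dF r) <= BF) ->
  H2_le n (Vtil k m F eps v) MV -> H2_le n (Util k m dF eps u) MU ->
  MV + MU <= C * eps ^ 2 -> dom n rho ->
  let K := ansatz_const k m BF C in
  1 <= K /\ Rabs (Vhat k m F rho) <= K /\ Rabs (Vtil k m F eps v rho) <= K * eps ^ 2 /\
  Rabs (Uhat k m dF rho + Util k m dF eps u rho) <= K.
Proof.
intros Hn Heps HBF0 HBF HV HU HMM Hrho K.
set (cV := Rpower (2 * m) (- (1 / (2 * INR k)))).
set (cU := Rpower (2 * m) (- (1 / (2 * INR k)) - 1)).
assert (cVp : 0 < cV) by (unfold cV, Rpower; apply exp_pos).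
assert (cUp : 0 < cU) by (unfold cU, Rpower; apply exp_pos).
assert (HK : K = cV * BF + cU * BF + 3 * Rabs C + 1) by (unfold K, ansatz_const; fold cV cU; ring).
destruct (HBF rho Hrho) as [HF HdF].
assert (0 <= cV * BF /\ 0 <= cU * BF) as [P1 P2] by (split; apply Rmult_le_pos; lra).
pose proof (Rle_abs C). pose proof (Rabs_pos C). pose proof (pow2_ge_0 eps).
assert (e1 : eps ^ 2 <= 1) by nra.
assert (MVp : 0 <= MV) by apply HV. assert (MUp : 0 <= MU) by apply HU.
assert (C * eps ^ 2 <= Rabs C * eps ^ 2) by (apply Rmult_le_compat_r; lra).
assert (Rabs C * eps ^ 2 <= Rabs C) by (rewrite <- (Rmult_1_r (Rabs C)) at 2; apply Rmult_le_compat_l; lra).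
assert (SV := radial_sobolev_sup n _ MV Hn HV rho Hrho).
assert (SU := radial_sobolev_sup n _ MU Hn HU rho Hrho).
repeat split.
- lra.
- unfold Vhat. fold cV. rewrite Rabs_mult, Rabs_right by lra.
  assert (cV * Rabs (F rho) <= cV * BF) by (apply Rmult_le_compat_l; lra). lra.
- assert (3 * Rabs C * eps ^ 2 <= K * eps ^ 2) by (apply Rmult_le_compat_r; lra). lra.
- unfold Uhat. fold cU. eapply Rle_trans; [apply Rabs_triang|].
  rewrite Rabs_Ropp, Rabs_mult, (Rabs_right cU) by lra.
  assert (cU * Rabs (dF rho) <= cU * BF) by (apply Rmult_le_compat_l; lra). lra.
Qed.

Theorem lemma5p3 (n k : nat) (m : R) (F dF ddF : R -> R) (v u : R -> R -> R) :
  (n = 1%nat \/ n = 2%nat \/ n = 3%nat) ->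
  (1 <= k)%nat ->
  (n = 3%nat -> k = 1%nat) ->
  0 < m ->
  ground_state n k F dF ddF ->
  (exists C eps0, 0 < eps0 /\
     forall eps, 0 < eps < eps0 ->
       dirac_profile n k m (omega m eps) (v eps) (u eps) /\
       exists MV MU,
         H2_le n (Vtil k m F eps (v eps)) MV /\
         H2_le n (Util k m dF eps (u eps)) MU /\
         MV + MU <= C * eps ^ 2) ->
  exists C eps0, 0 < eps0 /\
    forall eps, 0 < eps < eps0 ->
      forall rho, dom n rho ->
        opnorm_le4 (Wmat k m F eps (v eps) (u eps) rho) (C * eps ^ 2).
Proof.
intros Hn Hk Hk3 Hm Hgs [C [eps0 [He0 Hprofile]]].
destruct (ground_state_bounded n k F dF ddF Hn Hk Hk3 Hgs) as [BF [HBF0 HBF]].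
destruct k as [|j]; [lia|].
set (K := ansatz_const (S j) m BF C).
exists (4 * entry_const m K j), (Rmin eps0 (Rmin 1 (m / 2))).
split; [apply Rmin_pos; [lra | apply Rmin_pos; lra] |].
intros eps Heps rho Hrho.
pose proof (Rmin_l eps0 (Rmin 1 (m / 2))). pose proof (Rmin_r eps0 (Rmin 1 (m / 2))).
pose proof (Rmin_l 1 (m / 2)). pose proof (Rmin_r 1 (m / 2)).
destruct (Hprofile eps ltac:(lra)) as [_ [MV [MU [HV [HU HMM]]]]].
destruct (ansatz_rescaling (S j) m eps rho F dF (v eps) (u eps) Hk ltac:(lra)) as (Hv & Hu & Hp).
destruct (ansatz_amplitude_bounds n (S j) m BF C eps MV MU rho F dF (v eps) (u eps)
            Hn ltac:(lra) HBF0 HBF HV HU HMM Hrho) as (HK & HVh & HAV & HB).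
fold K in HK, HVh, HAV, HB.
assert (Entries := Wmat_entries_bound m K eps _ _ _ _ j Hm HK ltac:(lra) ltac:(lra) Hp HVh
  ltac:(rewrite Rplus_minus_l; exact HAV) HB F (v eps) (u eps) rho Hv Hu eq_refl).
rewrite Rmult_assoc. apply opnorm_le4_of_entries; [|exact Entries].
apply Rle_trans with (Rabs (Wmat (S j) m F eps (v eps) (u eps) rho 0 0));
  [apply Rabs_pos | apply Entries; lia].
Qed.
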